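(* Assume conditions (C1)–(C5). Then for every $\zeta=\{\zeta_k\}_{k\in\mathbb Z}\in\Theta$ the impulsive system $(I_\zeta)$ has a unique solution $\phi_\zeta(s)=\{\phi^{ij}_\zeta(s)\}$ defined on all of $\mathbb R$ and satisfying $\sup_{s\in\mathbb R}\|\phi_\zeta(s)\|\le H_0$.
   Context: Fix integers $m,n\ge1$ and $r\ge0$. Cells are indexed by pairs $(i,j)$, $1\le i\le m$, $1\le j\le n$. The $r$-neighbourhood of $(i,j)$ is $N_r(i,j)=\{(h,l):1\le h\le m,\ 1\le l\le n,\ \max(|h-i|,|l-j|)\le r\}$. Fix constants $a_{ij}>0$, $C^{hl}_{ij}\ge0$, and a continuous function $f:\mathbb R\to\mathbb R$. Vectors of $\mathbb R^{mn}$ are written $v=\{v_{ij}\}$, with norm $\|v\|=\max_{(i,j)}|v_{ij}|$. Time scale: $\{\theta_k\}_{k\in\mathbb Z}$ is strictly increasing, $\theta_{-1}<0<\theta_0$, and there exist $\omega>0$ and $p\in\mathbb N$ with $\theta_{k+2p}=\theta_k+\omega$ for all $k$. Set $\mathbb T_0=\bigcup_{k\in\mathbb Z}[\theta_{2k-1},\theta_{2k}]$, $\delta_k=\theta_{2k+1}-\theta_{2k}$, $\eta_k=\theta_{2k}-\theta_{2k-1}$ (both $p$-periodic in $k$), $\delta=\max_{1\le k\le p}\delta_k$. On $\mathbb T_0'=\mathbb T_0\setminus\{\theta_{2k-1}:k\in\mathbb Z\}$ define $\psi(t)=t-\sum_{0<\theta_{2k}<t}\delta_k$ for $t\ge0$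 and $\psi(t)=t+\sum_{t\le\theta_{2k}<0}\delta_k$ for $t<0$; put $s_k=\psi(\theta_{2k})$, so $s_k-s_{k-1}=\eta_k$, and write $\psi(\omega):=\omega-\sum_{k=1}^p\delta_k=\sum_{k=1}^p\eta_k$, so $s_{k+p}=s_k+\psi(\omega)$. Inputs: $\Lambda\subset\mathbb R^{mn}$ is compact and $F:\Lambda\to\Lambda$ is continuous. $\Theta$ is the set of all sequences $\zeta=\{\zeta_k\}_{k\in\mathbb Z}$, $\zeta_k=\{\zeta^{ij}_k\}\in\Lambda$, with $\zeta_{k+1}=F(\zeta_k)$ for all $k\in\mathbb Z$. Impulsive system $(I_\zeta)$: for $s\in(s_{k-1},s_k)$, $y_{ij}'(s)=-a_{ij}y_{ij}(s)-\sum_{(h,l)\in N_r(i,j)}C^{hl}_{ij}f(y_{hl}(s))y_{ij}(s)+\zeta^{ij}_k$, and at $s=s_k$, $y_{ij}(s_k+)-y_{ij}(s_k)=-\delta_ka_{ij}y_{ij}(s_k)-\delta_k\sum_{(h,l)\in N_r(i,j)}C^{hl}_{ij}f(y_{hl}(s_k))y_{ij}(s_k)+\delta_k\zeta^{ij}_k$, where $y(s_k+)=\lim_{s\to s_k^+}y(s)$. Solutions are left-continuous, continuous except for discontinuities of the first kind at the points $s_k$. Let $u_{ij}(s,\tau)=e^{-a_{ij}(s-\tau)}\prod_{\nu=l}^{k}(1-\delta_\nu a_{ij})$ if $s_{l-1}<\tau\le s_l$, $s_k<s\le s_{k+1}$, $k\ge l$, and $u_{ij}(s,\tau)=e^{-a_{ij}(s-\tau)}$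 if $s_k<\tau\le s\le s_{k+1}$. Let $\lambda_{ij}=a_{ij}-\frac1{\psi(\omega)}\sum_{\nu=0}^{p-1}\ln|1-\delta_\nu a_{ij}|$, $\lambda=\min_{(i,j)}\lambda_{ij}$. Conditions: (C1) $\delta_ka_{ij}\ne1$ for all $i,j,k$; (C2) $\lambda>0$; (C3) $\sup_{s\in\mathbb R}|f(s)|\le M_f$ for some $M_f>0$; (C4) $|f(s_1)-f(s_2)|\le L_f|s_1-s_2|$ for all $s_1,s_2$, for some $L_f>0$. Under (C1),(C2) fix positive numbers $K_{ij}$ with $|u_{ij}(s,\tau)|\le K_{ij}e^{-\lambda_{ij}(s-\tau)}$ for $s\ge\tau$, and put $K=\max K_{ij}$. Define $\bar c=\max_{(i,j)}\big(\frac{K_{ij}}{\lambda_{ij}}+\frac{p\delta K_{ij}}{1-e^{-\lambda_{ij}\psi(\omega)}}\big)\sum_{(h,l)\in N_r(i,j)}C^{hl}_{ij}$, $M_F=\max_{\eta\in\Lambda}\|F(\eta)\|$, and (when $M_f\bar c<1$) $H_0=\frac{M_F}{1-M_f\bar c}\max_{(i,j)}\big(\frac{K_{ij}}{\lambda_{ij}}+\frac{p\delta K_{ij}}{1-e^{-\lambda_{ij}\psi(\omega)}}\big)$, $\bar d=(M_f+H_0L_f)\max_{(i,j)}K_{ij}\sum_{(h,l)\in N_r(i,j)}C^{hl}_{ij}$. (C5) $(M_f+H_0L_f)\bar c<1$ (this includes $M_f\bar c<1$). *)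

From Stdlib Require Import Reals Lra Lia ZArith List.
Open Scope R_scope.

(* A vector of R^{mn}, v = {v_ij}, is represented by v : nat -> nat -> R;
   only the entries with 1 <= i <= m, 1 <= j <= n are meaningful. *)
Definition Vec := nat -> nat -> R.

Definition cells (m n : nat) : list (nat * nat) := list_prod (seq 1 m) (seq 1 n).

Definition in_cells (m n i j : nat) : Prop := (1 <= i <= m)%nat /\ (1 <= j <= n)%nat.

Definition vnorm (m n : nat) (v : Vec) : R :=
  fold_right Rmax 0 (map (fun ij => Rabs (v (fst ij) (snd ij))) (cells m n)).

Definition vsub (v w : Vec) : Vec := fun i j => v i j - w i j.

Definition veq (m n : nat) (v w : Vec) : Prop :=
  forall i j, in_cells m n i j -> v i j = w i j.

(* max / min over all cells (i,j); exact since (1,1) is a cell when m,n >= 1 *)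
Definition maxij (m n : nat) (g : nat -> nat -> R) : R :=
  fold_right Rmax (g 1%nat 1%nat) (map (fun ij => g (fst ij) (snd ij)) (cells m n)).
Definition minij (m n : nat) (g : nat -> nat -> R) : R :=
  fold_right Rmin (g 1%nat 1%nat) (map (fun ij => g (fst ij) (snd ij)) (cells m n)).

(* (h,l) in N_r(i,j): max(|h-i|,|l-j|) <= r  (|x-y| via truncated subtractions) *)
Definition in_nbhd (r i j : nat) (hl : nat * nat) : bool :=
  (Nat.leb (fst hl - i) r && Nat.leb (i - fst hl) r &&
   Nat.leb (snd hl - j) r && Nat.leb (j - snd hl) r)%bool.

Definition nbsum (m n r i j : nat) (g : nat -> nat -> R) : R :=
  fold_right Rplus 0
    (map (fun hl => g (fst hl) (snd hl)) (filter (in_nbhd r i j) (cells m n))).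

Definition sumZ (g : Z -> R) (a : Z) (N : nat) : R :=
  fold_right Rplus 0 (map (fun i => g (a + Z.of_nat i)%Z) (seq 0 N)).
Definition prodZ (g : Z -> R) (a : Z) (N : nat) : R :=
  fold_right Rmult 1 (map (fun i => g (a + Z.of_nat i)%Z) (seq 0 N)).

Definition delta (th : Z -> R) (k : Z) : R := th (2 * k + 1)%Z - th (2 * k)%Z.
Definition eta (th : Z -> R) (k : Z) : R := th (2 * k)%Z - th (2 * k - 1)%Z.

(* s_k = psi(theta_{2k}), with psi as in the paper:
   k >= 0 : psi(theta_{2k}) = theta_{2k} - sum_{0 < theta_{2j} < theta_{2k}} delta_j
                            = theta_{2k} - (delta_0 + ... + delta_{k-1})
   k < 0  : psi(theta_{2k}) = theta_{2k} + sum_{theta_{2k} <= theta_{2j} < 0} delta_j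
                            = theta_{2k} + (delta_k + ... + delta_{-1})
   (using that theta is strictly increasing with theta_{-1} < 0 < theta_0). *)
Definition sk (th : Z -> R) (k : Z) : R :=
  if (0 <=? k)%Z then th (2 * k)%Z - sumZ (delta th) 0 (Z.to_nat k)
  else th (2 * k)%Z + sumZ (delta th) k (Z.to_nat (- k)).

Definition psiw (th : Z -> R) (p : nat) : R := sumZ (eta th) 1 p.

Definition deltamax (th : Z -> R) (p : nat) : R :=
  fold_right Rmax (delta th 1) (map (fun k => delta th (Z.of_nat k)) (seq 1 p)).

Definition lam_ij (th : Z -> R) (p : nat) (a : R) : R :=
  a - (1 / psiw th p) * sumZ (fun nu => ln (Rabs (1 - delta th nu * a))) 0 p.

Definition lam (m n : nat) (th : Z -> R) (p : nat) (A : nat -> nat -> R) : R :=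
  minij m n (fun i j => lam_ij th p (A i j)).

(* u_ij(s,tau) = v, for a = a_ij (the two defining cases of u_ij) *)
Definition u_val (th : Z -> R) (a s tau v : R) : Prop :=
  (exists k l : Z, (l <= k)%Z /\ sk th (l - 1) < tau <= sk th l /\
      sk th k < s <= sk th (k + 1) /\
      v = exp (- a * (s - tau)) *
          prodZ (fun nu => 1 - delta th nu * a) l (Z.to_nat (k - l + 1)))
  \/ (exists k : Z, sk th k < tau /\ tau <= s /\ s <= sk th (k + 1) /\
      v = exp (- a * (s - tau))).

Definition coefK (th : Z -> R) (p : nat) (a Kij : R) : R :=
  Kij / lam_ij th p a +
  INR p * deltamax th p * Kij / (1 - exp (- lam_ij th p a * psiw th p)).

(* C i j h l stands for C^{hl}_{ij} *)
Definition cbar (m n r : nat) (th : Z -> R) (p : nat) (A : nat -> nat -> R)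
  (C : nat -> nat -> nat -> nat -> R) (K : nat -> nat -> R) : R :=
  maxij m n (fun i j => coefK th p (A i j) (K i j) * nbsum m n r i j (fun h l => C i j h l)).

Definition H0 (m n r : nat) (th : Z -> R) (p : nat) (A : nat -> nat -> R)
  (C : nat -> nat -> nat -> nat -> R) (K : nat -> nat -> R) (MF Mf : R) : R :=
  MF / (1 - Mf * cbar m n r th p A C K) * maxij m n (fun i j => coefK th p (A i j) (K i j)).

Definition compactV (m n : nat) (L : Vec -> Prop) : Prop :=
  forall x : nat -> Vec, (forall k, L (x k)) ->
  exists (phi : nat -> nat) (l : Vec),
    (forall k, (phi k < phi (S k))%nat) /\ L l /\
    forall eps, 0 < eps -> exists N, forall k, (N <= k)%nat ->
      vnorm m n (vsub (x (phi k)) l) < eps.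

Definition contV_on (m n : nat) (L : Vec -> Prop) (F : Vec -> Vec) : Prop :=
  forall v, L v -> forall eps, 0 < eps -> exists d, 0 < d /\
    forall w, L w -> vnorm m n (vsub w v) < d -> vnorm m n (vsub (F w) (F v)) < eps.

Definition in_Theta (m n : nat) (L : Vec -> Prop) (F : Vec -> Vec) (zeta : Z -> Vec) : Prop :=
  (forall k, L (zeta k)) /\ (forall k, veq m n (zeta (k + 1)%Z) (F (zeta k))).

Definition left_cont (g : R -> R) (t : R) : Prop :=
  forall eps, 0 < eps -> exists d, 0 < d /\
    forall x, t - d < x <= t -> Rabs (g x - g t) < eps.

Definition right_lim (g : R -> R) (t L : R) : Prop :=
  forall eps, 0 < eps -> exists d, 0 < d /\
    forall x, t < x < t + d -> Rabs (g x - L) < eps.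

Definition Nl (m n r : nat) (C : nat -> nat -> nat -> nat -> R) (f : R -> R)
  (y : Vec) (i j : nat) : R :=
  nbsum m n r i j (fun h l => C i j h l * f (y h l)) * y i j.

Definition is_solution (m n r : nat) (A : nat -> nat -> R)
  (C : nat -> nat -> nat -> nat -> R) (f : R -> R) (th : Z -> R)
  (zeta : Z -> Vec) (y : R -> Vec) : Prop :=
  forall i j, in_cells m n i j ->
    (forall (k : Z) (t : R), sk th (k - 1) < t < sk th k ->
       derivable_pt_lim (fun x => y x i j) t
         (- A i j * y t i j - Nl m n r C f (y t) i j + zeta k i j)) /\
    (forall t, (forall k, t <> sk th k) -> continuity_pt (fun x => y x i j) t) /\
    (forall k, left_cont (fun x => y x i j) (sk th k)) /\
    (forall k, exists L, right_lim (fun x => y x i j) (sk th k) L /\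
       L - y (sk th k) i j =
         - delta th k * A i j * y (sk th k) i j
         - delta th k * Nl m n r C f (y (sk th k)) i j
         + delta th k * zeta k i j).

(* Treating the nonlinear term as a forcing [g], each coordinate solves a scalar linear
   impulsive equation [y' = - a y + g k t], [y (s_k+) = (1 - delta_k a) y (s_k) + delta_k g k (s_k)].
   For bounded continuous forcing this equation has exactly one bounded solution, the
   variation-of-constants series over all earlier intervals; the exponential bound on the
   transition factor [u] and the [p]-periodicity of the [delta_k], [eta_k] bound it by
   [coefK * sup |g|], and any other bounded solution differs from it by a multiple of [u],
   which must vanish since [u] decays.  Plugging the nonlinearity back in gives a fixed-point
   problem on bounded families of interval-wise solutions: by (C5) the operator maps the ball of
   radius [H0] into itself and contracts with ratio [(Mf + H0 Lf) cbar], so Picard iteration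
   yields the solution, and every solution bounded by [H0] is a fixed point, hence equal to it. *)

From Stdlib Require Import Reals Lra Lia ZArith List ClassicalEpsilon.
From Coquelicot Require Import Coquelicot.
Open Scope R_scope.

Lemma fold_right_Rplus_init (l : list R) (c : R) :
  fold_right Rplus c l = fold_right Rplus 0 l + c.
Proof. induction l; simpl; [lra | rewrite IHl; lra]. Qed.

Lemma fold_right_Rmult_init (l : list R) (c : R) :
  fold_right Rmult c l = fold_right Rmult 1 l * c.
Proof. induction l; simpl; [lra | rewrite IHl; ring]. Qed.

Lemma sumZ_succ_r (g : Z -> R) a N : sumZ g a (S N) = sumZ g a N + g (a + Z.of_nat N)%Z.
Proof.
  unfold sumZ. rewrite seq_S, map_app, fold_right_app. simpl.
  rewrite fold_right_Rplus_init. lra.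
Qed.

Lemma sumZ_succ_l (g : Z -> R) a N : sumZ g a (S N) = g a + sumZ g (a + 1)%Z N.
Proof.
  unfold sumZ. simpl. rewrite Z.add_0_r. f_equal.
  rewrite <- seq_shift, map_map. f_equal. apply map_ext. intros i.
  f_equal. rewrite Nat2Z.inj_succ. lia.
Qed.

Lemma prodZ_succ_l (g : Z -> R) a N : prodZ g a (S N) = g a * prodZ g (a + 1)%Z N.
Proof.
  unfold prodZ. simpl. rewrite Z.add_0_r. f_equal.
  rewrite <- seq_shift, map_map. f_equal. apply map_ext. intros i.
  f_equal. rewrite Nat2Z.inj_succ. lia.
Qed.

Lemma prodZ_succ_r (g : Z -> R) a N : prodZ g a (S N) = prodZ g a N * g (a + Z.of_nat N)%Z.
Proof.
  unfold prodZ. rewrite seq_S, map_app, fold_right_app. simpl.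
  rewrite fold_right_Rmult_init. ring.
Qed.

Lemma sumZ_shift (g : Z -> R) c N :
  sumZ g (c + 1)%Z N = sumZ g c N + g (c + Z.of_nat N)%Z - g c.
Proof. pose proof (sumZ_succ_r g c N). pose proof (sumZ_succ_l g c N). lra. Qed.

Lemma fold_Rmax_ge_In (l : list R) d x : In x l -> x <= fold_right Rmax d l.
Proof.
  induction l as [|y l IH]; simpl; [contradiction |].
  intros [<- | Hx]; [apply Rmax_l |].
  eapply Rle_trans; [apply (IH Hx) | apply Rmax_r].
Qed.

Lemma fold_Rmax_lub (l : list R) d B :
  d <= B -> (forall x, In x l -> x <= B) -> fold_right Rmax d l <= B.
Proof.
  induction l; intros Hd H; simpl; auto.
  apply Rmax_lub; [apply H; left; auto | apply IHl; auto; intros; apply H; right; auto].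
Qed.

Lemma fold_Rmin_le_In (l : list R) d x : In x l -> fold_right Rmin d l <= x.
Proof.
  induction l as [|y l IH]; simpl; [contradiction |].
  intros [<- | Hx]; [apply Rmin_l |].
  eapply Rle_trans; [apply Rmin_r | apply (IH Hx)].
Qed.

Lemma periodic_add_mult (g : Z -> R) (P : Z) :
  (forall x, g (x + P)%Z = g x) -> forall q x, g (x + P * q)%Z = g x.
Proof.
  intros HP.
  assert (Hn : forall (n : nat) x, g (x + P * Z.of_nat n)%Z = g x).
  { induction n; intros x.
    - f_equal. lia.
    - rewrite Nat2Z.inj_succ.
      replace (x + P * Z.succ (Z.of_nat n))%Z with ((x + P * Z.of_nat n) + P)%Z by lia.
      rewrite HP. apply IHn. }
  intros q x. destruct (Z_le_gt_dec 0 q).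
  - rewrite <- (Z2Nat.id q) by lia. apply Hn.
  - pose proof (Hn (Z.to_nat (- q)) (x + P * q)%Z) as H.
    rewrite Z2Nat.id in H by lia.
    replace (x + P * q + P * - q)%Z with x in H by lia. auto.
Qed.

Lemma exp_le_compat x y : x <= y -> exp x <= exp y.
Proof. intros. destruct (Req_dec x y); [subst; lra |]. left. apply exp_increasing. lra. Qed.

Lemma exp_le_1 x : x <= 0 -> exp x <= 1.
Proof. intros. rewrite <- exp_0. apply exp_le_compat. lra. Qed.

Lemma exp_split a x y z : exp (- a * (x - y)) * exp (- a * (y - z)) = exp (- a * (x - z)).
Proof. rewrite <- exp_plus. f_equal. ring. Qed.

(** * The time scale *)

Section TimeScale.
Variables (th : Z -> R) (omega : R) (p : nat).
Hypothesis Hth_inc : forall k, th k < th (k + 1)%Z.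
Hypothesis Homega : 0 < omega.
Hypothesis Hper : forall k, th (k + 2 * Z.of_nat p)%Z = th k + omega.

Notation s := (sk th).

Lemma period_index_pos : (1 <= p)%nat.
Proof. destruct p; [|lia]. specialize (Hper 0%Z). simpl in Hper. lra. Qed.

Lemma eta_pos k : 0 < eta th k.
Proof.
  unfold eta. pose proof (Hth_inc (2 * k - 1)%Z).
  replace (2 * k - 1 + 1)%Z with (2 * k)%Z in H by lia. lra.
Qed.

Lemma delta_pos k : 0 < delta th k.
Proof. unfold delta. pose proof (Hth_inc (2 * k)%Z). lra. Qed.

Lemma sk_diff k : s k - s (k - 1) = eta th k.
Proof.
  unfold sk, eta.
  destruct (Z_le_gt_dec 1 k).
  - rewrite (proj2 (Z.leb_le 0 k)), (proj2 (Z.leb_le 0 (k - 1))) by lia.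
    replace (Z.to_nat k) with (S (Z.to_nat (k - 1))) by (rewrite <- Z2Nat.inj_succ by lia; f_equal; lia).
    rewrite sumZ_succ_r, Z2Nat.id by lia. unfold delta.
    replace (0 + (k - 1))%Z with (k - 1)%Z by lia.
    replace (2 * (k - 1) + 1)%Z with (2 * k - 1)%Z by lia. lra.
  - destruct (Z.eq_dec k 0).
    + subst. simpl. unfold sumZ, delta. simpl. lra.
    + rewrite (proj2 (Z.leb_gt 0 k)), (proj2 (Z.leb_gt 0 (k - 1))) by lia.
      replace (Z.to_nat (- (k - 1))) with (S (Z.to_nat (- k)))
        by (rewrite <- Z2Nat.inj_succ by lia; f_equal; lia).
      rewrite sumZ_succ_l. replace (k - 1 + 1)%Z with k by lia. unfold delta.
      replace (2 * (k - 1) + 1)%Z with (2 * k - 1)%Z by lia. lra.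
Qed.

Lemma sk_succ k : s (k + 1) = s k + eta th (k + 1).
Proof. pose proof (sk_diff (k + 1)). replace (k + 1 - 1)%Z with k in H by lia. lra. Qed.

Lemma sk_add_nat k (N : nat) : s (k + Z.of_nat N) - s k = sumZ (eta th) (k + 1) N.
Proof.
  induction N.
  - rewrite Z.add_0_r. unfold sumZ. simpl. lra.
  - rewrite sumZ_succ_r, Nat2Z.inj_succ.
    replace (k + Z.succ (Z.of_nat N))%Z with ((k + Z.of_nat N) + 1)%Z by lia.
    rewrite sk_succ. replace (k + 1 + Z.of_nat N)%Z with (k + Z.of_nat N + 1)%Z by lia. lra.
Qed.

Lemma sk_lt k k' : (k < k')%Z -> s k < s k'.
Proof.
  intros Hk. replace k' with (k + 1 + Z.of_nat (Z.to_nat (k' - k - 1)))%Z by lia.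
  induction (Z.to_nat (k' - k - 1)) as [|N IH].
  - rewrite Z.add_0_r, sk_succ. pose proof (eta_pos (k + 1)). lra.
  - rewrite Nat2Z.inj_succ, Z.add_succ_r, <- Z.add_1_r, sk_succ.
    pose proof (eta_pos (k + 1 + Z.of_nat N + 1)). lra.
Qed.

Lemma sk_le k k' : (k <= k')%Z -> s k <= s k'.
Proof. intros. destruct (Z.eq_dec k k'); [subst; lra |]. left. apply sk_lt. lia. Qed.

Lemma sk_pred_lt k : s (k - 1) < s k.
Proof. apply sk_lt. lia. Qed.

Lemma eta_periodic k : eta th (k + Z.of_nat p) = eta th k.
Proof.
  unfold eta.
  replace (2 * (k + Z.of_nat p) - 1)%Z with ((2 * k - 1) + 2 * Z.of_nat p)%Z by lia.
  replace (2 * (k + Z.of_nat p))%Z with (2 * k + 2 * Z.of_nat p)%Z by lia.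
  rewrite !Hper. lra.
Qed.

Lemma delta_periodic k : delta th (k + Z.of_nat p) = delta th k.
Proof.
  unfold delta.
  replace (2 * (k + Z.of_nat p) + 1)%Z with ((2 * k + 1) + 2 * Z.of_nat p)%Z by lia.
  replace (2 * (k + Z.of_nat p))%Z with (2 * k + 2 * Z.of_nat p)%Z by lia.
  rewrite !Hper. lra.
Qed.

Lemma sumZ_eta_period c : sumZ (eta th) c p = psiw th p.
Proof.
  assert (H1 : forall c, sumZ (eta th) (c + 1) p = sumZ (eta th) c p)
    by (intros; rewrite sumZ_shift, eta_periodic; lra).
  assert (H : forall c, sumZ (eta th) c p = sumZ (eta th) 0 p).
  { intros c'. induction c' using Z.peano_ind.
    - reflexivity.
    - rewrite <- Z.add_1_r, H1. auto.
    - rewrite <- IHc'. replace c' with (Z.pred c' + 1)%Z at 2 by lia. rewrite H1. auto. }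
  unfold psiw. rewrite (H c), (H 1%Z). auto.
Qed.

Lemma sk_add_period k : s (k + Z.of_nat p) = s k + psiw th p.
Proof. pose proof (sk_add_nat k p). rewrite sumZ_eta_period in H. lra. Qed.

Lemma sk_add_period_mult k (q : nat) : s (k + Z.of_nat p * Z.of_nat q) = s k + INR q * psiw th p.
Proof.
  induction q.
  - rewrite Z.mul_0_r, Z.add_0_r. simpl. lra.
  - rewrite Nat2Z.inj_succ, S_INR.
    replace (k + Z.of_nat p * Z.succ (Z.of_nat q))%Z
      with ((k + Z.of_nat p * Z.of_nat q) + Z.of_nat p)%Z by lia.
    rewrite sk_add_period. lra.
Qed.

Lemma psiw_pos : 0 < psiw th p.
Proof.
  pose proof (sk_add_period 0). pose proof period_index_pos.
  pose proof (sk_lt 0 (0 + Z.of_nat p) ltac:(lia)). lra.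
Qed.

Lemma delta_le_deltamax k : delta th k <= deltamax th p.
Proof.
  pose proof period_index_pos as Hp.
  set (P := Z.of_nat p).
  set (r := (1 + (k - 1) mod P)%Z).
  assert (Hk : k = (r + P * ((k - 1) / P))%Z).
  { unfold r. pose proof (Z.div_mod (k - 1) P). unfold P in *. lia. }
  assert (Hr : (1 <= r <= P)%Z).
  { unfold r. pose proof (Z.mod_pos_bound (k - 1) P). unfold P in *. lia. }
  rewrite Hk, (periodic_add_mult (delta th) P) by (intro; apply delta_periodic).
  unfold deltamax. apply fold_Rmax_ge_In.
  replace r with (Z.of_nat (Z.to_nat r)) by (apply Z2Nat.id; lia).
  apply (in_map (fun k0 : nat => delta th (Z.of_nat k0))).
  apply in_seq. unfold P in Hr. lia.
Qed.

Lemma deltamax_pos : 0 < deltamax th p.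
Proof. eapply Rlt_le_trans; [apply (delta_pos 1) | apply delta_le_deltamax]. Qed.

Lemma sk_neq_open_interval k t : s (k - 1) < t < s k -> forall j, t <> s j.
Proof.
  intros Ht j ->.
  destruct (Z_le_gt_dec j (k - 1)) as [Hj | Hj].
  - pose proof (sk_le j (k - 1) Hj). lra.
  - pose proof (sk_le k j ltac:(lia)). lra.
Qed.

Lemma interval_index_exists t : exists k, s (k - 1) < t <= s k.
Proof.
  pose proof psiw_pos as Hps.
  destruct (INR_unbounded (Rabs (t - s 0) / psiw th p)) as [q Hq].
  assert (Hq' : Rabs (t - s 0) < INR q * psiw th p).
  { apply Rmult_lt_compat_r with (r := psiw th p) in Hq; auto.
    unfold Rdiv in Hq. rewrite Rmult_assoc, Rinv_l in Hq by lra. lra. }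
  set (P := (Z.of_nat p * Z.of_nat q)%Z).
  pose proof (sk_add_period_mult 0 q) as Hup.
  pose proof (sk_add_period_mult (- P) q) as Hdn. fold P in Hup, Hdn.
  replace (- P + P)%Z with 0%Z in Hdn by lia.
  assert (HL : s (- P) < t).
  { pose proof (Rle_abs (s 0 - t)). rewrite Rabs_minus_sym in H. lra. }
  assert (HU : t <= s (- P + Z.of_nat (Z.to_nat (2 * P)))).
  { rewrite Z2Nat.id by (unfold P; lia). replace (- P + 2 * P)%Z with (0 + P)%Z by lia.
    pose proof (Rle_abs (t - s 0)). lra. }
  revert HL HU. generalize (- P)%Z. induction (Z.to_nat (2 * P)) as [|N IH]; intros L H1 H2.
  - rewrite Z.add_0_r in H2. lra.
  - destruct (Rle_dec t (s (L + 1))).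
    + exists (L + 1)%Z. replace (L + 1 - 1)%Z with L by lia. auto.
    + apply (IH (L + 1)%Z); [lra |]. rewrite Nat2Z.inj_succ in H2.
      replace (L + 1 + Z.of_nat N)%Z with (L + Z.succ (Z.of_nat N))%Z by lia. auto.
Qed.

End TimeScale.

(* An arbitrary integer when no interval contains [t]. *)
Definition idx (th : Z -> R) (t : R) : Z :=
  epsilon (inhabits 0%Z) (fun k => sk th (k - 1) < t <= sk th k).

Section IntervalIndex.
Variables (th : Z -> R) (omega : R) (p : nat).
Hypothesis Hth_inc : forall k, th k < th (k + 1)%Z.
Hypothesis Homega : 0 < omega.
Hypothesis Hper : forall k, th (k + 2 * Z.of_nat p)%Z = th k + omega.

Lemma idx_spec t : sk th (idx th t - 1) < t <= sk th (idx th t).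
Proof. unfold idx. apply epsilon_spec. apply (interval_index_exists th omega p); auto. Qed.

Lemma idx_unique t k : sk th (k - 1) < t <= sk th k -> idx th t = k.
Proof.
  intros Hk. pose proof (idx_spec t) as Hi. set (k' := idx th t) in *.
  destruct (Z.lt_total k' k) as [Hlt | [Heq | Hgt]]; auto.
  - pose proof (sk_le th Hth_inc k' (k - 1) ltac:(lia)). lra.
  - pose proof (sk_le th Hth_inc k (k' - 1) ltac:(lia)). lra.
Qed.

End IntervalIndex.

(** * Real analysis *)

Lemma continuity_pt_eps (f : R -> R) x : continuity_pt f x <->
  (forall eps, 0 < eps -> exists d, 0 < d /\ forall y, Rabs (y - x) < d -> Rabs (f y - f x) < eps).
Proof.
  unfold continuity_pt, continue_in, limit1_in, limit_in. simpl. unfold R_dist. split.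
  - intros Hc eps Heps. destruct (Hc eps Heps) as [d [Hd H1]]. exists d. split; auto.
    intros y Hy. destruct (Req_dec y x) as [-> | Hyx].
    + rewrite Rminus_diag, Rabs_R0. auto.
    + apply H1. repeat split; auto.
  - intros Hc eps Heps. destruct (Hc eps Heps) as [d [Hd H1]]. exists d. split; auto.
    intros y [_ Hy]. auto.
Qed.

Lemma continuity_pt_ext_loc (f g : R -> R) x d : 0 < d ->
  (forall y, Rabs (y - x) < d -> f y = g y) -> continuity_pt g x -> continuity_pt f x.
Proof.
  intros Hd Heq H. rewrite continuity_pt_eps in *. intros eps Heps.
  destruct (H eps Heps) as [e [He H1]]. exists (Rmin e d). split; [apply Rmin_pos; auto |].
  intros y Hy. pose proof (Rmin_l e d). pose proof (Rmin_r e d).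
  rewrite !Heq; [apply H1 | rewrite Rminus_diag, Rabs_R0 |]; lra.
Qed.

Lemma derivable_pt_lim_ext_loc (f g : R -> R) x l d : 0 < d ->
  (forall y, Rabs (y - x) < d -> f y = g y) ->
  derivable_pt_lim g x l -> derivable_pt_lim f x l.
Proof.
  intros Hd Heq H. apply is_derive_Reals. apply is_derive_Reals in H.
  apply (is_derive_ext_loc g f); auto.
  exists (mkposreal d Hd). intros y Hy. symmetry. apply Heq. apply Hy.
Qed.

Lemma continuity_pt_exp_lin c z : continuity_pt (fun z => exp (c * z)) z.
Proof.
  apply derivable_continuous_pt. exists (c * exp (c * z)).
  apply is_derive_Reals. auto_derive; auto. ring.
Qed.

Lemma right_lim_unique g t L1 L2 : right_lim g t L1 -> right_lim g t L2 -> L1 = L2.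
Proof.
  intros H1 H2. destruct (Req_dec L1 L2) as [| Hne]; auto. exfalso.
  assert (Hd : 0 < Rabs (L1 - L2) / 2) by (pose proof (Rabs_pos_lt (L1 - L2) ltac:(lra)); lra).
  destruct (H1 _ Hd) as [d1 [Hd1 G1]]. destruct (H2 _ Hd) as [d2 [Hd2 G2]].
  set (y := t + Rmin d1 d2 / 2).
  pose proof (Rmin_pos d1 d2 Hd1 Hd2). pose proof (Rmin_l d1 d2). pose proof (Rmin_r d1 d2).
  specialize (G1 y ltac:(unfold y; lra)). specialize (G2 y ltac:(unfold y; lra)).
  pose proof (Rabs_triang (L1 - g y) (g y - L2)) as Htri.
  replace (L1 - g y + (g y - L2)) with (L1 - L2) in Htri by ring.
  rewrite Rabs_minus_sym in G1. lra.
Qed.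

Lemma right_lim_ext_loc (f g : R -> R) t L d : 0 < d ->
  (forall y, t < y < t + d -> f y = g y) -> right_lim g t L -> right_lim f t L.
Proof.
  intros Hd Heq H eps Heps. destruct (H eps Heps) as [e [He H1]].
  exists (Rmin e d). split; [apply Rmin_pos; auto |]. intros y Hy.
  pose proof (Rmin_l e d). pose proof (Rmin_r e d). rewrite Heq by lra. apply H1. lra.
Qed.

Lemma continuity_pt_right_lim f t : continuity_pt f t -> right_lim f t (f t).
Proof.
  rewrite continuity_pt_eps. intros H eps Heps. destruct (H eps Heps) as [d [Hd H1]].
  exists d. split; auto. intros y Hy. apply H1. rewrite Rabs_right; lra.
Qed.

Lemma right_lim_abs_le g t L d B : right_lim g t L -> 0 < d ->
  (forall y, t < y < t + d -> Rabs (g y) <= B) -> Rabs L <= B.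
Proof.
  intros Hl Hd Hb. destruct (Rle_dec (Rabs L) B) as [| Hn]; auto. exfalso.
  apply Rnot_le_lt in Hn.
  destruct (Hl (Rabs L - B)) as [e [He H]]; [lra |].
  set (y := t + Rmin e d / 2).
  pose proof (Rmin_pos e d He Hd). pose proof (Rmin_l e d). pose proof (Rmin_r e d).
  specialize (Hb y ltac:(unfold y; lra)). specialize (H y ltac:(unfold y; lra)).
  pose proof (Rabs_triang_inv L (g y)). rewrite Rabs_minus_sym in H. lra.
Qed.

Lemma continuity_pt_abs_le_right f x d B : continuity_pt f x -> 0 < d ->
  (forall y, x < y < x + d -> Rabs (f y) <= B) -> Rabs (f x) <= B.
Proof. intros Hc. apply right_lim_abs_le. apply continuity_pt_right_lim. auto. Qed.

Lemma left_cont_agree f F x d : 0 < d -> left_cont f x -> continuity_pt F x ->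
  (forall y, x - d < y < x -> f y = F y) -> f x = F x.
Proof.
  intros Hd Hl Hc Heq.
  destruct (Req_dec (f x) (F x)) as [| Hne]; auto. exfalso.
  assert (He : 0 < Rabs (f x - F x) / 2) by (pose proof (Rabs_pos_lt (f x - F x) ltac:(lra)); lra).
  destruct (Hl _ He) as [d1 [Hd1 H1]]. rewrite continuity_pt_eps in Hc. destruct (Hc _ He) as [d2 [Hd2 H2]].
  set (m := Rmin d (Rmin d1 d2)).
  assert (Hm : 0 < m) by (unfold m; repeat apply Rmin_pos; auto).
  pose proof (Rmin_l d (Rmin d1 d2)). pose proof (Rmin_r d (Rmin d1 d2)).
  pose proof (Rmin_l d1 d2). pose proof (Rmin_r d1 d2).
  set (y := x - m / 2).
  specialize (H1 y ltac:(unfold y, m in *; lra)).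
  specialize (H2 y ltac:(unfold y, m in *; rewrite Rabs_left; lra)).
  rewrite Heq in H1 by (unfold y, m in *; lra).
  pose proof (Rabs_triang (- (F y - f x)) (F y - F x)) as Htri.
  replace (- (F y - f x) + (F y - F x)) with (f x - F x) in Htri by ring.
  rewrite Rabs_Ropp in Htri. lra.
Qed.

Lemma Rle_of_le_mult_exp x y c e0 : 0 < e0 ->
  (forall e, 0 < e <= e0 -> x <= y * exp (c * e)) -> x <= y.
Proof.
  intros He0 H. destruct (Rle_dec x y) as [| Hn]; auto. exfalso. apply Rnot_le_lt in Hn.
  assert (Hc : continuity_pt (fun e => y * exp (c * e)) 0).
  { apply continuity_pt_mult; [apply continuity_pt_const; intros ? ?; auto | apply continuity_pt_exp_lin]. }
  rewrite continuity_pt_eps in Hc. destruct (Hc (x - y) ltac:(lra)) as [d [Hd Hy]].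
  set (e := Rmin e0 (d / 2)).
  pose proof (Rmin_pos e0 (d / 2) He0 ltac:(lra)). pose proof (Rmin_l e0 (d / 2)). pose proof (Rmin_r e0 (d / 2)).
  specialize (H e ltac:(unfold e; lra)). specialize (Hy e ltac:(rewrite Rminus_0_r, Rabs_right; unfold e; lra)).
  rewrite Rmult_0_r, exp_0, Rmult_1_r in Hy. apply Rabs_def2 in Hy. lra.
Qed.

Lemma eq_0_of_geometric_bound x c q : 0 <= q < 1 -> (forall N, Rabs x <= c * q ^ N) -> x = 0.
Proof.
  intros Hq H.
  destruct (Req_dec x 0) as [| Hx]; auto. exfalso.
  assert (Hax : 0 < Rabs x) by (apply Rabs_pos_lt; auto).
  assert (Hc : 0 < c) by (specialize (H O); simpl in H; lra).
  destruct (pow_lt_1_zero q ltac:(rewrite Rabs_right; lra) (Rabs x / c)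
              ltac:(apply Rdiv_lt_0_compat; lra)) as [N HN].
  specialize (HN N (le_n N)). specialize (H N).
  rewrite Rabs_right in HN by (apply Rle_ge, pow_le; lra).
  apply Rmult_lt_compat_l with (r := c) in HN; auto.
  replace (c * (Rabs x / c)) with (Rabs x) in HN by (field; lra). lra.
Qed.

Lemma exp_mult_INR c q : exp (c * INR q) = exp c ^ q.
Proof.
  induction q; [simpl; rewrite Rmult_0_r; apply exp_0 |].
  rewrite S_INR, Rmult_plus_distr_l, Rmult_1_r, exp_plus, IHq. simpl. ring.
Qed.

Lemma eq_0_of_exp_decay_bound x C c : 0 < c ->
  (forall q : nat, Rabs x <= C * exp (- c * INR q)) -> x = 0.
Proof.
  intros Hc H. apply (eq_0_of_geometric_bound x C (exp (- c))).
  - split; [left; apply exp_pos |]. rewrite <- exp_0. apply exp_increasing. lra.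
  - intros N. rewrite <- exp_mult_INR. apply H.
Qed.

Lemma is_lim_seq_abs_affine_le u (l : R) c d b : is_lim_seq u l ->
  (forall n, Rabs (c * u n + d) <= b) -> Rabs (c * l + d) <= b.
Proof.
  intros Hl Hb.
  assert (Hl' : is_lim_seq (fun n => Rabs (c * u n + d)) (Rabs (c * l + d))).
  { apply (is_lim_seq_abs _ (c * l + d)).
    apply (is_lim_seq_plus _ _ (c * l) d); [| apply is_lim_seq_const | reflexivity].
    apply (is_lim_seq_scal_l _ c l). auto. }
  exact (is_lim_seq_le _ _ _ b Hb Hl' (is_lim_seq_const b)).
Qed.

(* [psum f N = f 0 + ... + f (N - 1)]; unlike [sum_n], the empty sum is available. *)
Fixpoint psum (f : nat -> R) (N : nat) : R :=
  match N with O => 0 | S N' => psum f N' + f N' end.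

Lemma sum_n_psum f N : sum_n f N = psum f (S N).
Proof. induction N; [rewrite sum_O; simpl; lra | rewrite sum_Sn, IHN; reflexivity]. Qed.

Lemma psum_abs f N : Rabs (psum f N) <= psum (fun n => Rabs (f n)) N.
Proof.
  induction N; simpl; [rewrite Rabs_R0; lra |].
  eapply Rle_trans; [apply Rabs_triang | lra].
Qed.

Lemma psum_le f g N : (forall n, f n <= g n) -> psum f N <= psum g N.
Proof. intros H; induction N; simpl; [lra |]. specialize (H N). lra. Qed.

Lemma psum_plus f g N : psum (fun n => f n + g n) N = psum f N + psum g N.
Proof. induction N; simpl; lra. Qed.

Lemma psum_scal c f N : psum (fun n => c * f n) N = c * psum f N.
Proof. induction N; simpl; [ring | rewrite IHN; ring]. Qed.

Lemma psum_ext f g N : (forall n, f n = g n) -> psum f N = psum g N.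
Proof. intros H; induction N; simpl; [lra | rewrite IHN, H; lra]. Qed.

Lemma psum_telescope E N : psum (fun n => E n - E (S n)) N = E O - E N.
Proof. induction N; simpl; lra. Qed.

Lemma psum_add f P N : psum f (P + N) = psum f P + psum (fun n => f (P + n)%nat) N.
Proof.
  induction N; simpl.
  - rewrite Nat.add_0_r. lra.
  - rewrite Nat.add_succ_r. simpl. rewrite IHN. lra.
Qed.

Lemma psum_le_length f N : (forall n, f n <= 1) -> psum f N <= INR N.
Proof. intros H; induction N; [simpl; lra |]. rewrite S_INR. cbn [psum]. specialize (H N). lra. Qed.

(* Each block of [P] consecutive terms is at most [P] times a power of [rho]. *)
Lemma psum_quasi_geometric_le (E : nat -> R) P rho : (1 <= P)%nat ->
  (forall n, 0 <= E n <= 1) -> (forall n, E (P + n)%nat = rho * E n) -> 0 <= rho < 1 ->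
  forall N, psum E N <= INR P / (1 - rho).
Proof.
  intros HP HE Hper Hrho.
  assert (Hq : INR P <= INR P / (1 - rho)).
  { apply Rmult_le_reg_r with (r := 1 - rho); [lra |]. unfold Rdiv.
    rewrite Rmult_assoc, Rinv_l by lra. pose proof (pos_INR P). nra. }
  intros N. induction N as [N IH] using lt_wf_ind.
  assert (HEP : psum E P <= INR P) by (apply psum_le_length; intros; apply HE).
  destruct (le_lt_dec N P).
  - eapply Rle_trans; [apply psum_le_length; intros; apply HE |].
    eapply Rle_trans; [apply le_INR; eauto | apply Hq].
  - replace N with (P + (N - P))%nat by lia. rewrite psum_add.
    rewrite (psum_ext (fun n => E (P + n)%nat) (fun n => rho * E n)), psum_scal by (intros; apply Hper).
    specialize (IH (N - P)%nat ltac:(lia)).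
    assert (rho * psum E (N - P) <= rho * (INR P / (1 - rho))) by (apply Rmult_le_compat_l; lra).
    replace (INR P / (1 - rho)) with (INR P + rho * (INR P / (1 - rho))) by (field; lra). lra.
Qed.

Lemma ex_series_of_psum_bounded b M : (forall n, 0 <= b n) -> (forall N, psum b N <= M) -> ex_series b.
Proof.
  intros Hb HM.
  destruct (ex_finite_lim_seq_incr (sum_n b) M) as [l Hl].
  - intros n. rewrite !sum_n_psum. simpl. specialize (Hb (S n)). lra.
  - intros n. rewrite sum_n_psum. apply HM.
  - exists l. exact Hl.
Qed.

Lemma ex_RInt_continuity f u v : (forall z, continuity_pt f z) -> ex_RInt f u v.
Proof.
  intros. apply (@ex_RInt_continuous R_CompleteNormedModule). intros.
  apply continuity_pt_filterlim. auto.
Qed.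

Lemma RInt_exp_weighted_le (h : R -> R) x y t M lam : x <= y -> 0 < lam ->
  (forall z, continuity_pt h z) ->
  (forall z, x < z < y -> Rabs (h z) <= M * exp (- lam * (t - z))) ->
  Rabs (RInt h x y) <= M / lam * (exp (- lam * (t - y)) - exp (- lam * (t - x))).
Proof.
  intros Hxy Hlam Hc Hb.
  assert (Hcm : forall z, continuity_pt (fun z => M * exp (- lam * (t - z))) z).
  { intros z. apply derivable_continuous_pt. exists (M * (lam * exp (- lam * (t - z)))).
    apply is_derive_Reals. auto_derive; auto. unfold Rminus; ring. }
  eapply Rle_trans; [apply abs_RInt_le; auto; apply ex_RInt_continuity; auto |].
  eapply Rle_trans.
  - apply (RInt_le _ (fun z => M * exp (- lam * (t - z)))); auto; apply ex_RInt_continuity; auto.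
    intros. apply (continuity_pt_comp h Rabs); [apply Hc | apply Rcontinuity_abs].
  - right. apply is_RInt_unique.
    replace (M / lam * (exp (- lam * (t - y)) - exp (- lam * (t - x)))) with
      (M / lam * exp (- lam * (t - y)) - M / lam * exp (- lam * (t - x))) by ring.
    apply (is_RInt_derive (fun z => M / lam * exp (- lam * (t - z)))).
    + intros z _. auto_derive; auto. unfold Rminus. field. lra.
    + intros z _. apply continuity_pt_filterlim. auto.
Qed.

Lemma ode_linear_homogeneous (d : R -> R) x0 x1 a : x0 < x1 ->
  (forall t, x0 < t < x1 -> derivable_pt_lim d t (- a * d t)) ->
  exists c, forall t, x0 < t < x1 -> d t = c * exp (- a * t).
Proof.
  intros Hx Hd.
  set (h := fun t => exp (a * t) * d t).
  assert (Hh : forall t, x0 < t < x1 -> derivable_pt_lim h t 0).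
  { intros t Ht. unfold h.
    assert (H1 : derivable_pt_lim (fun t => exp (a * t)) t (a * exp (a * t)))
      by (apply is_derive_Reals; auto_derive; auto; ring).
    pose proof (derivable_pt_lim_mult _ _ _ _ _ H1 (Hd t Ht)) as H. unfold mult_fct in H.
    replace 0 with (a * exp (a * t) * d t + exp (a * t) * (- a * d t)) by ring. exact H. }
  set (m := (x0 + x1) / 2).
  exists (h m). intros t Ht.
  set (lo := Rmin t m). set (hi := Rmax t m).
  assert (Hlo : x0 < lo /\ hi < x1 /\ lo <= hi /\ lo <= t <= hi /\ lo <= m <= hi)
    by (unfold lo, hi, m, Rmin, Rmax; destruct (Rle_dec t ((x0 + x1) / 2)); lra).
  assert (pr : forall x, lo < x < hi -> derivable_pt h x) by (intros x Hxx; exists 0; apply Hh; lra).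
  assert (Hc : forall x, lo <= x <= hi -> continuity_pt h x)
    by (intros x Hxx; apply derivable_continuous_pt; exists 0; apply Hh; lra).
  assert (Hn : constant_D_eq h (fun x => lo <= x <= hi) (h lo)).
  { apply (null_derivative_loc h lo hi pr Hc). intros x P. apply derive_pt_eq_0. apply Hh. lra. }
  rewrite (Hn m), <- (Hn t) by lra. unfold h.
  replace (exp (a * t) * d t * exp (- a * t)) with (d t * (exp (a * t) * exp (- a * t))) by ring.
  rewrite <- exp_plus. replace (a * t + - a * t) with 0 by ring. rewrite exp_0. ring.
Qed.

(** * The scalar linear impulsive equation *)

(* Variation of constants: on the [k]-th interval
   [lin_sol k t = exp (- a (t - s_{k-1})) init_val k + vc_int k t], where [vc_int] integrates
   the forcing over the current interval and [init_val k = y (s_{k-1}+)] collects the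
   contributions [jump_input j] of the earlier intervals [j < k], carried to [s_{k-1}] by
   [u (s_{k-1}, s_j)] (series index [n = k - 1 - j]). *)
Definition vc_prim (th : Z -> R) (a : R) (g : Z -> R -> R) (k : Z) (t : R) : R :=
  RInt (fun z => exp (a * z) * g k z) (sk th (k - 1)) t.
Definition vc_int th a g k t : R := exp (- a * t) * vc_prim th a g k t.
Definition jump_prod (th : Z -> R) (a : R) (l k : Z) : R :=
  prodZ (fun nu => 1 - delta th nu * a) l (Z.to_nat (k - l + 1)).
Definition jump_input th a g (j : Z) : R :=
  (1 - delta th j * a) * vc_int th a g j (sk th j) + delta th j * g j (sk th j).
Definition init_term th a g (k : Z) (n : nat) : R :=
  exp (- a * (sk th (k - 1) - sk th (k - 1 - Z.of_nat n))) * jump_prod th a (k - Z.of_nat n) (k - 1)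
  * jump_input th a g (k - 1 - Z.of_nat n).
Definition init_val th a g (k : Z) : R := Series (init_term th a g k).
Definition lin_sol th a g (k : Z) (t : R) : R :=
  exp (- a * (t - sk th (k - 1))) * init_val th a g k + vc_int th a g k t.

(* The two parts of the contribution of interval [j] to the solution at time [t] in interval [k]. *)
Definition prop_int th a g (k j : Z) (t : R) : R :=
  jump_prod th a j (k - 1) * (exp (- a * (t - sk th j)) * vc_int th a g j (sk th j)).
Definition prop_jump th a g (k j : Z) (t : R) : R :=
  exp (- a * (t - sk th j)) * jump_prod th a (j + 1) (k - 1) * (delta th j * g j (sk th j)).

Lemma jump_prod_empty th a k : jump_prod th a (k + 1) k = 1.
Proof. unfold jump_prod. replace (k - (k + 1) + 1)%Z with 0%Z by lia. reflexivity. Qed.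

Lemma jump_prod_first th a j k : (j <= k)%Z ->
  jump_prod th a j k = (1 - delta th j * a) * jump_prod th a (j + 1) k.
Proof.
  intros. unfold jump_prod.
  replace (Z.to_nat (k - j + 1)) with (S (Z.to_nat (k - (j + 1) + 1)))
    by (rewrite <- Z2Nat.inj_succ by lia; f_equal; lia).
  apply prodZ_succ_l.
Qed.

Lemma jump_prod_last th a j k : (j <= k)%Z ->
  jump_prod th a j k = jump_prod th a j (k - 1) * (1 - delta th k * a).
Proof.
  intros. unfold jump_prod.
  replace (Z.to_nat (k - j + 1)) with (S (Z.to_nat (k - 1 - j + 1)))
    by (rewrite <- Z2Nat.inj_succ by lia; f_equal; lia).
  rewrite prodZ_succ_r, Z2Nat.id by lia. replace (j + (k - 1 - j + 1))%Z with k by lia. reflexivity.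
Qed.

Lemma init_term_split th a g k n t :
  exp (- a * (t - sk th (k - 1))) * init_term th a g k n =
  prop_int th a g k (k - 1 - Z.of_nat n) t + prop_jump th a g k (k - 1 - Z.of_nat n) t.
Proof.
  unfold init_term, jump_input, prop_int, prop_jump.
  replace (k - Z.of_nat n)%Z with (k - 1 - Z.of_nat n + 1)%Z by lia.
  rewrite (jump_prod_first th a (k - 1 - Z.of_nat n) (k - 1)) by lia.
  rewrite <- (exp_split a t (sk th (k - 1)) (sk th (k - 1 - Z.of_nat n))). ring.
Qed.

Lemma vc_prim_minus th a g1 g2 k t :
  (forall k t, continuity_pt (g1 k) t) -> (forall k t, continuity_pt (g2 k) t) ->
  vc_prim th a (fun k t => g1 k t - g2 k t) k t = vc_prim th a g1 k t - vc_prim th a g2 k t.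
Proof.
  intros H1 H2. unfold vc_prim.
  rewrite (fun u v : R => eq_refl : u - v = minus u v).
  rewrite <- (@RInt_minus R_CompleteNormedModule).
  - apply RInt_ext. intros. change (exp (a * x) * (g1 k x - g2 k x) = exp (a * x) * g1 k x - exp (a * x) * g2 k x). ring.
  - apply ex_RInt_continuity. intros. apply continuity_pt_mult; auto. apply continuity_pt_exp_lin.
  - apply ex_RInt_continuity. intros. apply continuity_pt_mult; auto. apply continuity_pt_exp_lin.
Qed.

Lemma lin_sol_minus th a g1 g2 k t :
  (forall k t, continuity_pt (g1 k) t) -> (forall k t, continuity_pt (g2 k) t) ->
  (forall k, ex_series (init_term th a g1 k)) -> (forall k, ex_series (init_term th a g2 k)) ->
  lin_sol th a (fun k t => g1 k t - g2 k t) k t = lin_sol th a g1 k t - lin_sol th a g2 k t.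
Proof.
  intros H1 H2 E1 E2.
  assert (HJ : forall k t, vc_int th a (fun k t => g1 k t - g2 k t) k t = vc_int th a g1 k t - vc_int th a g2 k t)
    by (intros; unfold vc_int; rewrite vc_prim_minus by auto; ring).
  assert (HT : forall n, init_term th a (fun k t => g1 k t - g2 k t) k n = init_term th a g1 k n - init_term th a g2 k n)
    by (intros; unfold init_term, jump_input; rewrite HJ; ring).
  unfold lin_sol, init_val. rewrite (Series_ext _ _ HT), Series_minus, HJ by auto. ring.
Qed.

Section LinearImpulsive.
Variables (th : Z -> R) (omega : R) (p : nat).
Hypothesis Hth_inc : forall k, th k < th (k + 1)%Z.
Hypothesis Homega : 0 < omega.
Hypothesis Hper : forall k, th (k + 2 * Z.of_nat p)%Z = th k + omega.
Variables (a Kc lam : R).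
Hypothesis HKc : 0 < Kc.
Hypothesis Hlam : 0 < lam.
Hypothesis Hu : forall s tau v, tau <= s -> u_val th a s tau v -> Rabs v <= Kc * exp (- lam * (s - tau)).
Variable g : Z -> R -> R.
Hypothesis Hg : forall k t, continuity_pt (g k) t.
Variable G : R.
Hypothesis HG : forall k t, Rabs (g k t) <= G.

Notation s := (sk th).

Definition lin_gain : R := Kc / lam + INR p * deltamax th p * Kc / (1 - exp (- lam * psiw th p)).

Lemma forcing_bound_nonneg : 0 <= G.
Proof. eapply Rle_trans; [apply Rabs_pos | apply (HG 0%Z 0)]. Qed.

Lemma vc_integrand_continuous k z : continuity_pt (fun z => exp (a * z) * g k z) z.
Proof. apply continuity_pt_mult; [apply continuity_pt_exp_lin | apply Hg]. Qed.

Lemma vc_int_derive k t : derivable_pt_lim (vc_int th a g k) t (- a * vc_int th a g k t + g k t).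
Proof.
  assert (Hprim : derivable_pt_lim (vc_prim th a g k) t (exp (a * t) * g k t)).
  { apply is_derive_Reals. unfold vc_prim.
    apply (is_derive_RInt (fun z => exp (a * z) * g k z)
             (fun b => RInt (fun z => exp (a * z) * g k z) (s (k - 1)) b) (s (k - 1)) t).
    - exists (mkposreal 1 Rlt_0_1). intros.
      apply (@RInt_correct R_CompleteNormedModule). apply ex_RInt_continuity. apply vc_integrand_continuous.
    - apply continuity_pt_filterlim. apply vc_integrand_continuous. }
  assert (Hexp : derivable_pt_lim (fun t => exp (- a * t)) t (- a * exp (- a * t)))
    by (apply is_derive_Reals; auto_derive; auto; ring).
  pose proof (derivable_pt_lim_mult _ _ _ _ _ Hexp Hprim) as H. unfold mult_fct in H.
  unfold vc_int. replace (- a * (exp (- a * t) * vc_prim th a g k t) + g k t) with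
    (- a * exp (- a * t) * vc_prim th a g k t + exp (- a * t) * (exp (a * t) * g k t)); [exact H |].
  rewrite <- Rmult_assoc, <- exp_plus. replace (- a * t + a * t) with 0 by ring. rewrite exp_0. ring.
Qed.

Lemma lin_sol_derive k t : derivable_pt_lim (lin_sol th a g k) t (- a * lin_sol th a g k t + g k t).
Proof.
  assert (H1 : derivable_pt_lim (fun t => exp (- a * (t - s (k - 1))) * init_val th a g k) t
                 (- a * exp (- a * (t - s (k - 1))) * init_val th a g k))
    by (apply is_derive_Reals; auto_derive; auto; unfold Rminus; ring).
  pose proof (derivable_pt_lim_plus _ _ _ _ _ H1 (vc_int_derive k t)) as H. unfold plus_fct in H.
  unfold lin_sol. replace (- a * (exp (- a * (t - s (k - 1))) * init_val th a g k + vc_int th a g k t) + g k t)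
    with (- a * exp (- a * (t - s (k - 1))) * init_val th a g k + (- a * vc_int th a g k t + g k t)) by ring.
  exact H.
Qed.

Lemma lin_sol_continuous k t : continuity_pt (lin_sol th a g k) t.
Proof. apply derivable_continuous_pt. eexists. apply lin_sol_derive. Qed.

Lemma lin_sol_left k : lin_sol th a g k (s (k - 1)) = init_val th a g k.
Proof.
  unfold lin_sol, vc_int, vc_prim. rewrite RInt_point, Rminus_diag, Rmult_0_r, exp_0.
  unfold zero; simpl. ring.
Qed.

Lemma vc_int_RInt k t c :
  c * vc_int th a g k t = RInt (fun z => c * exp (- a * (t - z)) * g k z) (s (k - 1)) t.
Proof.
  unfold vc_int, vc_prim. rewrite <- Rmult_assoc.
  change ((c * exp (- a * t)) * RInt (fun z => exp (a * z) * g k z) (s (k - 1)) t) with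
    (scal (c * exp (- a * t)) (RInt (fun z => exp (a * z) * g k z) (s (k - 1)) t)).
  rewrite <- RInt_scal by (apply ex_RInt_continuity; apply vc_integrand_continuous).
  apply RInt_ext. intros x _. change (scal (c * exp (- a * t)) (exp (a * x) * g k x)) with
    ((c * exp (- a * t)) * (exp (a * x) * g k x)).
  replace (exp (- a * (t - x))) with (exp (- a * t) * exp (a * x)) by (rewrite <- exp_plus; f_equal; ring).
  match goal with |- ?x = ?y => change (@eq R x y) end. ring.
Qed.

Lemma continuity_pt_scal_exp c b z : continuity_pt (fun z => c * exp (- a * (b - z))) z.
Proof.
  apply derivable_continuous_pt. exists (c * (a * exp (- a * (b - z)))).
  apply is_derive_Reals. auto_derive; auto. unfold Rminus; ring.
Qed.

Lemma kernel_integral_bound j t (kern : R -> R) x y : x <= y ->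
  (forall z, continuity_pt kern z) ->
  (forall z, x < z < y -> Rabs (kern z) <= Kc * exp (- lam * (t - z))) ->
  Rabs (RInt (fun z => kern z * g j z) x y) <=
  Kc * G / lam * (exp (- lam * (t - y)) - exp (- lam * (t - x))).
Proof.
  intros Hxy Hc Hk. apply RInt_exp_weighted_le; auto.
  - intros z. apply continuity_pt_mult; auto.
  - intros z Hz. rewrite Rabs_mult.
    replace (Kc * G * exp (- lam * (t - z))) with ((Kc * exp (- lam * (t - z))) * G) by ring.
    apply Rmult_le_compat; auto using Rabs_pos.
Qed.

Lemma vc_int_bound k t : s (k - 1) < t <= s k ->
  Rabs (vc_int th a g k t) <= Kc * G / lam * (1 - exp (- lam * (t - s (k - 1)))).
Proof.
  intros Ht. rewrite <- (Rmult_1_l (vc_int th a g k t)), vc_int_RInt.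
  replace (1 - exp (- lam * (t - s (k - 1)))) with (exp (- lam * (t - t)) - exp (- lam * (t - s (k - 1))))
    by (rewrite Rminus_diag, Rmult_0_r, exp_0; auto).
  apply kernel_integral_bound; [lra | apply continuity_pt_scal_exp |].
  intros z Hz. rewrite Rmult_1_l. apply Hu; [lra |].
  right. exists (k - 1)%Z. replace (k - 1 + 1)%Z with k by lia. repeat split; lra.
Qed.

Lemma prop_int_bound k j t : (j <= k - 1)%Z -> s (k - 1) < t <= s k ->
  Rabs (prop_int th a g k j t) <=
  Kc * G / lam * (exp (- lam * (t - s j)) - exp (- lam * (t - s (j - 1)))).
Proof.
  intros Hj Ht.
  assert (Hsj : s j <= s (k - 1)) by (apply sk_le; auto).
  unfold prop_int. rewrite <- Rmult_assoc, vc_int_RInt.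
  apply kernel_integral_bound; [apply sk_le; auto; lia | apply continuity_pt_scal_exp |].
  intros z Hz.
  replace (jump_prod th a j (k - 1) * exp (- a * (t - s j)) * exp (- a * (s j - z)))
    with (exp (- a * (t - z)) * jump_prod th a j (k - 1)) by (rewrite <- (exp_split a t (s j) z); ring).
  apply Hu; [lra |]. left. exists (k - 1)%Z, j. replace (k - 1 + 1)%Z with k by lia.
  repeat split; try lra; lia.
Qed.

(* [u (t, s_j+)]: approximate [s_j] from the right, where [u_val] applies. *)
Lemma transition_bound_right k j t : (j <= k - 1)%Z -> s (k - 1) < t <= s k ->
  Rabs (exp (- a * (t - s j)) * jump_prod th a (j + 1) (k - 1)) <= Kc * exp (- lam * (t - s j)).
Proof.
  intros Hj Ht.
  assert (Hsj : s j <= s (k - 1)) by (apply sk_le; auto).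
  pose proof (eta_pos th Hth_inc (j + 1)). pose proof (sk_succ th j).
  apply (Rle_of_le_mult_exp _ _ (lam - a) (Rmin (eta th (j + 1)) (t - s j))); [apply Rmin_pos; lra |].
  intros e [He He0].
  pose proof (Rmin_l (eta th (j + 1)) (t - s j)). pose proof (Rmin_r (eta th (j + 1)) (t - s j)).
  assert (Hv : Rabs (exp (- a * (t - (s j + e))) * jump_prod th a (j + 1) (k - 1))
               <= Kc * exp (- lam * (t - (s j + e)))).
  { apply Hu; [lra |].
    destruct (Z.eq_dec j (k - 1)) as [-> | Ej].
    - replace (k - 1 + 1)%Z with k in * by lia.
      replace (jump_prod th a k (k - 1)) with 1
        by (rewrite <- (jump_prod_empty th a (k - 1)); f_equal; lia).
      rewrite Rmult_1_r.
      right. exists (k - 1)%Z. replace (k - 1 + 1)%Z with k by lia. repeat split; lra.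
    - left. exists (k - 1)%Z, (j + 1)%Z. replace (j + 1 - 1)%Z with j by lia.
      replace (k - 1 + 1)%Z with k by lia. repeat split; try lra; lia. }
  replace (exp (- a * (t - (s j + e)))) with (exp (- a * (t - s j)) * exp (a * e)) in Hv
    by (rewrite <- exp_plus; f_equal; ring).
  replace (exp (- lam * (t - (s j + e)))) with (exp (- lam * (t - s j)) * exp (lam * e)) in Hv
    by (rewrite <- exp_plus; f_equal; ring).
  rewrite (Rmult_comm (exp (- a * (t - s j)))), Rmult_assoc, Rabs_mult, (Rabs_right (exp (a * e))),
    Rmult_comm in Hv by (left; apply exp_pos).
  replace (exp ((lam - a) * e)) with (exp (lam * e) * / exp (a * e))
    by (rewrite <- exp_Ropp, <- exp_plus; f_equal; ring).
  pose proof (exp_pos (a * e)).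
  apply Rmult_le_reg_r with (r := exp (a * e)); auto.
  replace (Kc * exp (- lam * (t - s j)) * (exp (lam * e) * / exp (a * e)) * exp (a * e)) with
    (Kc * (exp (- lam * (t - s j)) * exp (lam * e))) by (field; lra).
  exact Hv.
Qed.

Lemma prop_jump_bound k j t : (j <= k - 1)%Z -> s (k - 1) < t <= s k ->
  Rabs (prop_jump th a g k j t) <= deltamax th p * G * Kc * exp (- lam * (t - s j)).
Proof.
  intros Hj Ht. unfold prop_jump. rewrite Rabs_mult.
  assert (Rabs (delta th j * g j (s j)) <= deltamax th p * G).
  { rewrite Rabs_mult, Rabs_right by (left; apply delta_pos; auto).
    apply Rmult_le_compat; auto using Rabs_pos.
    - left; apply delta_pos; auto.
    - apply (delta_le_deltamax th omega); auto. }
  replace (deltamax th p * G * Kc * exp (- lam * (t - s j))) with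
    (Kc * exp (- lam * (t - s j)) * (deltamax th p * G)) by ring.
  apply Rmult_le_compat; auto using Rabs_pos. apply (transition_bound_right k); auto.
Qed.

Lemma decay_per_period_bounds : 0 <= exp (- lam * psiw th p) < 1.
Proof.
  pose proof (psiw_pos th omega p Hth_inc Homega Hper). split; [left; apply exp_pos |].
  rewrite <- exp_0. apply exp_increasing. nra.
Qed.

Lemma psum_decay_le t k N : s (k - 1) <= t ->
  psum (fun n => exp (- lam * (t - s (k - 1 - Z.of_nat n)))) N <= INR p / (1 - exp (- lam * psiw th p)).
Proof.
  intros Ht. apply psum_quasi_geometric_le.
  - apply (period_index_pos th omega p Homega Hper).
  - intros n. split; [left; apply exp_pos |]. apply exp_le_1.
    assert (s (k - 1 - Z.of_nat n) <= s (k - 1)) by (apply sk_le; auto; lia). nra.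
  - intros n. rewrite <- exp_plus. f_equal.
    pose proof (sk_add_period th omega p Hper (k - 1 - Z.of_nat (p + n))) as H.
    replace (k - 1 - Z.of_nat (p + n) + Z.of_nat p)%Z with (k - 1 - Z.of_nat n)%Z in H by lia.
    rewrite H. ring.
  - apply decay_per_period_bounds.
Qed.

Lemma psum_prop_int_le k t N : s (k - 1) < t <= s k ->
  psum (fun n => Rabs (prop_int th a g k (k - 1 - Z.of_nat n) t)) N <=
  Kc * G / lam * (exp (- lam * (t - s (k - 1))) - exp (- lam * (t - s (k - 1 - Z.of_nat N)))).
Proof.
  intros Ht. set (E := fun n : nat => exp (- lam * (t - s (k - 1 - Z.of_nat n)))).
  replace (exp (- lam * (t - s (k - 1)))) with (E O) by (unfold E; simpl; rewrite Z.sub_0_r; auto).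
  fold (E N). rewrite <- psum_telescope, <- psum_scal.
  apply psum_le. intros n. unfold E. rewrite Nat2Z.inj_succ.
  replace (k - 1 - Z.succ (Z.of_nat n))%Z with (k - 1 - Z.of_nat n - 1)%Z by lia.
  apply prop_int_bound; auto. lia.
Qed.

Lemma psum_prop_jump_le k t N : s (k - 1) < t <= s k ->
  psum (fun n => Rabs (prop_jump th a g k (k - 1 - Z.of_nat n) t)) N <=
  deltamax th p * G * Kc * (INR p / (1 - exp (- lam * psiw th p))).
Proof.
  intros Ht. pose proof forcing_bound_nonneg. pose proof (deltamax_pos th omega p Hth_inc Homega Hper).
  eapply Rle_trans; [apply psum_le; intros n; apply prop_jump_bound; auto; lia |].
  rewrite psum_scal. apply Rmult_le_compat_l; [apply Rmult_le_pos; nra |].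
  apply psum_decay_le. lra.
Qed.

Lemma ex_series_init_term k : ex_series (init_term th a g k).
Proof.
  apply ex_series_Rabs.
  pose proof (sk_pred_lt th Hth_inc k) as Hk.
  set (c := exp (a * (s k - s (k - 1)))).
  assert (Hsplit : forall n, Rabs (init_term th a g k n) <=
            c * (Rabs (prop_int th a g k (k - 1 - Z.of_nat n) (s k)) +
                 Rabs (prop_jump th a g k (k - 1 - Z.of_nat n) (s k)))).
  { intros n.
    assert (Hc : c * exp (- a * (s k - s (k - 1))) = 1)
      by (unfold c; rewrite <- exp_plus; replace (_ + _) with 0 by ring; apply exp_0).
    replace (init_term th a g k n) with (c * (exp (- a * (s k - s (k - 1))) * init_term th a g k n))
      by (rewrite <- Rmult_assoc, Hc; ring).
    rewrite init_term_split, Rabs_mult, (Rabs_right c) by (left; apply exp_pos).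
    apply Rmult_le_compat_l; [left; apply exp_pos | apply Rabs_triang]. }
  apply (ex_series_of_psum_bounded _
           (c * (Kc * G / lam + deltamax th p * G * Kc * (INR p / (1 - exp (- lam * psiw th p)))))).
  - intros. apply Rabs_pos.
  - intros N. eapply Rle_trans; [apply psum_le; exact Hsplit |].
    rewrite psum_scal, psum_plus. apply Rmult_le_compat_l; [left; apply exp_pos |].
    apply Rplus_le_compat; [| apply psum_prop_jump_le; lra].
    eapply Rle_trans; [apply psum_prop_int_le; lra |].
    pose proof forcing_bound_nonneg. pose proof (exp_pos (- lam * (s k - s (k - 1 - Z.of_nat N)))).
    assert (exp (- lam * (s k - s (k - 1))) <= 1) by (apply exp_le_1; nra).
    assert (0 <= Kc * G / lam) by (apply Rmult_le_pos; [nra | left; apply Rinv_0_lt_compat; auto]).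
    nra.
Qed.

Lemma lin_sol_partial_bound k t N : s (k - 1) < t <= s k ->
  Rabs (exp (- a * (t - s (k - 1))) * psum (init_term th a g k) N + vc_int th a g k t) <= lin_gain * G.
Proof.
  intros Ht.
  rewrite <- psum_scal, (psum_ext _ _ N (fun n => init_term_split th a g k n t)), psum_plus.
  pose proof (psum_prop_int_le k t N Ht). pose proof (psum_prop_jump_le k t N Ht).
  pose proof (vc_int_bound k t Ht).
  pose proof (psum_abs (fun n => prop_int th a g k (k - 1 - Z.of_nat n) t) N).
  pose proof (psum_abs (fun n => prop_jump th a g k (k - 1 - Z.of_nat n) t) N).
  pose proof (Rabs_triang (psum (fun n => prop_int th a g k (k - 1 - Z.of_nat n) t) N)
                          (psum (fun n => prop_jump th a g k (k - 1 - Z.of_nat n) t) N)).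
  eapply Rle_trans; [apply Rabs_triang |].
  pose proof (exp_pos (- lam * (t - s (k - 1 - Z.of_nat N)))).
  pose proof forcing_bound_nonneg. pose proof decay_per_period_bounds.
  assert (0 <= Kc * G / lam) by (apply Rmult_le_pos; [nra | left; apply Rinv_0_lt_compat; auto]).
  unfold lin_gain.
  replace ((Kc / lam + INR p * deltamax th p * Kc / (1 - exp (- lam * psiw th p))) * G) with
    (Kc * G / lam + deltamax th p * G * Kc * (INR p / (1 - exp (- lam * psiw th p)))) by (field; lra).
  nra.
Qed.

Lemma lin_sol_bound k t : s (k - 1) < t <= s k -> Rabs (lin_sol th a g k t) <= lin_gain * G.
Proof.
  intros Ht. unfold lin_sol, init_val.
  apply (is_lim_seq_abs_affine_le (sum_n (init_term th a g k))).
  - apply Series_correct, ex_series_init_term.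
  - intros N. rewrite sum_n_psum. apply lin_sol_partial_bound; auto.
Qed.

Lemma lin_sol_bound_closed k t : s (k - 1) <= t <= s k -> Rabs (lin_sol th a g k t) <= lin_gain * G.
Proof.
  intros Ht. pose proof (sk_pred_lt th Hth_inc k).
  destruct (Req_dec t (s (k - 1))) as [-> | Hne]; [| apply lin_sol_bound; lra].
  apply (continuity_pt_abs_le_right _ _ (s k - s (k - 1))); [apply lin_sol_continuous | lra |].
  intros y Hy. apply lin_sol_bound. lra.
Qed.

Lemma init_val_succ k :
  init_val th a g (k + 1) = (1 - delta th k * a) * lin_sol th a g k (s k) + delta th k * g k (s k).
Proof.
  unfold init_val at 1. rewrite Series_incr_1 by apply ex_series_init_term.
  assert (H0 : init_term th a g (k + 1) 0 = jump_input th a g k).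
  { unfold init_term. simpl Z.of_nat.
    replace (k + 1 - 1 - 0)%Z with k by lia. replace (k + 1 - 1)%Z with k by lia.
    replace (k + 1 - 0)%Z with (k + 1)%Z by lia.
    rewrite jump_prod_empty, Rminus_diag, Rmult_0_r, exp_0. ring. }
  assert (HS : forall n, init_term th a g (k + 1) (S n) =
     ((1 - delta th k * a) * exp (- a * (s k - s (k - 1)))) * init_term th a g k n).
  { intros n. unfold init_term. rewrite Nat2Z.inj_succ.
    replace (k + 1 - 1 - Z.succ (Z.of_nat n))%Z with (k - 1 - Z.of_nat n)%Z by lia.
    replace (k + 1 - 1)%Z with k by lia.
    replace (k + 1 - Z.succ (Z.of_nat n))%Z with (k - Z.of_nat n)%Z by lia.
    rewrite (jump_prod_last th a (k - Z.of_nat n) k) by lia.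
    rewrite <- (exp_split a (s k) (s (k - 1)) (s (k - 1 - Z.of_nat n))). ring. }
  rewrite H0, (Series_ext _ _ HS), Series_scal_l. fold (init_val th a g k).
  unfold jump_input, lin_sol. ring.
Qed.

Section BoundedSolution.
Variables (psi : R -> R) (RL : Z -> R) (B : R).
Hypothesis Hpsi_deriv : forall k t, s (k - 1) < t < s k -> derivable_pt_lim psi t (- a * psi t + g k t).
Hypothesis Hpsi_left : forall k, left_cont psi (s k).
Hypothesis Hpsi_right : forall k, right_lim psi (s k) (RL k).
Hypothesis Hpsi_jump : forall k,
  RL k - psi (s k) = - delta th k * a * psi (s k) + delta th k * g k (s k).
Hypothesis Hpsi_bound : forall t, Rabs (psi t) <= B.

Lemma bounded_solution_shape k : exists c,
  (forall t, s (k - 1) < t <= s k -> psi t = lin_sol th a g k t + c * exp (- a * t)) /\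
  RL (k - 1)%Z = init_val th a g k + c * exp (- a * s (k - 1)).
Proof.
  pose proof (sk_pred_lt th Hth_inc k) as Hk.
  destruct (ode_linear_homogeneous (fun t => psi t - lin_sol th a g k t) (s (k - 1)) (s k) a Hk) as [c Hc].
  { intros t Ht. pose proof (derivable_pt_lim_minus _ _ _ _ _ (Hpsi_deriv k t Ht) (lin_sol_derive k t)) as H.
    unfold minus_fct in H. replace (- a * (psi t - lin_sol th a g k t)) with
      (- a * psi t + g k t - (- a * lin_sol th a g k t + g k t)) by ring. exact H. }
  set (F := fun t => lin_sol th a g k t + c * exp (- a * t)).
  assert (HF : forall x, continuity_pt F x).
  { intros x. apply continuity_pt_plus; [apply lin_sol_continuous |].
    apply continuity_pt_mult; [apply continuity_pt_const; intros ? ?; auto | apply continuity_pt_exp_lin]. }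
  assert (Heq : forall y, s (k - 1) < y < s k -> psi y = F y) by (intros y Hy; specialize (Hc y Hy); unfold F; simpl in Hc; lra).
  exists c. split.
  - intros t Ht. destruct (Req_dec t (s k)) as [-> | Hne]; [| apply Heq; lra].
    apply (left_cont_agree psi F (s k) (s k - s (k - 1))); auto; [lra |].
    intros y Hy. apply Heq. lra.
  - replace (init_val th a g k) with (lin_sol th a g k (s (k - 1))) by apply lin_sol_left.
    change (RL (k - 1)%Z = F (s (k - 1))).
    apply (right_lim_unique psi (s (k - 1))); [apply Hpsi_right |].
    apply (right_lim_ext_loc _ F _ _ (s k - s (k - 1))); [lra | intros y Hy; apply Heq; lra |].
    apply continuity_pt_right_lim, HF.
Qed.

(* The mismatch between the actual right limit at [s_{k-1}] and the one of [lin_sol]. *)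
Let defect (k : Z) : R := RL (k - 1)%Z - init_val th a g k.

Lemma defect_succ k : defect (k + 1) = (1 - delta th k * a) * exp (- a * (s k - s (k - 1))) * defect k.
Proof.
  destruct (bounded_solution_shape k) as [c [H1 H2]].
  pose proof (sk_pred_lt th Hth_inc k).
  specialize (H1 (s k) ltac:(lra)).
  unfold defect. replace (k + 1 - 1)%Z with k by lia. rewrite init_val_succ.
  replace (RL k) with ((1 - delta th k * a) * psi (s k) + delta th k * g k (s k))
    by (pose proof (Hpsi_jump k); lra).
  rewrite H2, H1.
  replace (exp (- a * s k)) with (exp (- a * (s k - s (k - 1))) * exp (- a * s (k - 1)))
    by (rewrite <- exp_plus; f_equal; ring).
  ring.
Qed.

Lemma defect_iter (n : nat) k :
  defect k = exp (- a * (s (k - 1) - s (k - 1 - Z.of_nat n))) * jump_prod th a (k - Z.of_nat n) (k - 1)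
             * defect (k - Z.of_nat n)%Z.
Proof.
  revert k. induction n; intros k.
  - simpl. rewrite !Z.sub_0_r, Rminus_diag, Rmult_0_r, exp_0.
    replace (jump_prod th a k (k - 1)) with 1 by (rewrite <- (jump_prod_empty th a (k - 1)); f_equal; lia).
    ring.
  - rewrite IHn, Nat2Z.inj_succ.
    set (j := (k - Z.succ (Z.of_nat n))%Z).
    replace (k - Z.of_nat n)%Z with (j + 1)%Z by (unfold j; lia).
    replace (k - 1 - Z.succ (Z.of_nat n))%Z with (j - 1)%Z by (unfold j; lia).
    replace (k - 1 - Z.of_nat n)%Z with j by (unfold j; lia).
    rewrite defect_succ, (jump_prod_first th a j (k - 1)) by (unfold j; lia).
    rewrite <- (exp_split a (s (k - 1)) (s j) (s (j - 1))). ring.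
Qed.

Lemma defect_bound k : Rabs (defect k) <= B + lin_gain * G.
Proof.
  pose proof (sk_pred_lt th Hth_inc k).
  assert (H1 : Rabs (RL (k - 1)%Z) <= B) by (apply (right_lim_abs_le psi (s (k - 1)) _ 1); auto; lra).
  assert (H2 : Rabs (init_val th a g k) <= lin_gain * G)
    by (rewrite <- lin_sol_left; apply lin_sol_bound_closed; lra).
  unfold defect. eapply Rle_trans; [apply Rabs_triang |]. rewrite Rabs_Ropp. lra.
Qed.

(* Going back [p q] intervals multiplies the defect by [u], which decays like
   [exp (- lam q psi(omega))], while the defect stays bounded. *)
Lemma defect_zero k : defect k = 0.
Proof.
  pose proof (psiw_pos th omega p Hth_inc Homega Hper) as Hps.
  pose proof (sk_pred_lt th Hth_inc k).
  set (c := exp (a * (s k - s (k - 1)))).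
  apply (eq_0_of_exp_decay_bound _ (c * Kc * (B + lin_gain * G)) (lam * psiw th p)); [nra |].
  intros q. rewrite (defect_iter (p * q)%nat k).
  set (j := (k - 1 - Z.of_nat (p * q))%Z).
  replace (k - Z.of_nat (p * q))%Z with (j + 1)%Z by (unfold j; lia).
  assert (Hsj : s (k - 1) = s j + INR q * psiw th p).
  { pose proof (sk_add_period_mult th omega p Hper j q) as E.
    replace (j + Z.of_nat p * Z.of_nat q)%Z with (k - 1)%Z in E by (unfold j; rewrite Nat2Z.inj_mul; lia).
    auto. }
  replace (exp (- a * (s (k - 1) - s j))) with (c * exp (- a * (s k - s j)))
    by (unfold c; rewrite <- exp_plus; f_equal; ring).
  assert (Hu_j : Rabs (exp (- a * (s k - s j)) * jump_prod th a (j + 1) (k - 1))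
                 <= Kc * exp (- (lam * psiw th p) * INR q)).
  { eapply Rle_trans; [apply (transition_bound_right k); [unfold j; lia | lra] |].
    apply Rmult_le_compat_l; [lra |]. apply exp_le_compat. rewrite Hsj in *. nra. }
  pose proof (defect_bound (j + 1)%Z). pose proof (Rabs_pos (defect (j + 1)%Z)).
  pose proof (exp_pos (- (lam * psiw th p) * INR q)).
  assert (Hc : 0 < c) by apply exp_pos.
  rewrite Rmult_assoc, Rmult_assoc, Rabs_mult, (Rabs_right c), <- Rmult_assoc, Rabs_mult by lra.
  replace (c * Kc * (B + lin_gain * G) * exp (- (lam * psiw th p) * INR q)) with
    (c * ((Kc * exp (- (lam * psiw th p) * INR q)) * (B + lin_gain * G))) by ring.
  apply Rmult_le_compat_l; [lra |]. apply Rmult_le_compat; auto using Rabs_pos.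
Qed.

Lemma bounded_solution_eq :
  (forall k, RL (k - 1)%Z = init_val th a g k) /\
  (forall k t, s (k - 1) < t <= s k -> psi t = lin_sol th a g k t).
Proof.
  split.
  - intros k. pose proof (defect_zero k). unfold defect in H. lra.
  - intros k t Ht. destruct (bounded_solution_shape k) as [c [H1 H2]].
    pose proof (defect_zero k) as H0. unfold defect in H0.
    assert (c = 0).
    { assert (c * exp (- a * s (k - 1)) = 0) by lra. pose proof (exp_pos (- a * s (k - 1))).
      destruct (Rmult_integral _ _ H); auto. lra. }
    rewrite H1 by auto. subst c. ring.
Qed.

End BoundedSolution.

End LinearImpulsive.

(** * Cells and the nonlinearity *)

Lemma in_cells_In m n i j : in_cells m n i j <-> In (i, j) (cells m n).
Proof. unfold cells, in_cells. rewrite in_prod_iff, !in_seq. lia. Qed.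

Lemma vnorm_ge m n v i j : in_cells m n i j -> Rabs (v i j) <= vnorm m n v.
Proof.
  intros H. apply fold_Rmax_ge_In.
  apply in_cells_In in H. apply (in_map (fun ij => Rabs (v (fst ij) (snd ij))) _ _ H).
Qed.

Lemma vnorm_le m n v B : 0 <= B ->
  (forall i j, in_cells m n i j -> Rabs (v i j) <= B) -> vnorm m n v <= B.
Proof.
  intros HB H. apply fold_Rmax_lub; auto.
  intros x Hx. apply in_map_iff in Hx. destruct Hx as [[i j] [<- Hij]].
  apply H. apply in_cells_In. auto.
Qed.

Lemma maxij_ge m n g i j : in_cells m n i j -> g i j <= maxij m n g.
Proof.
  intros H. apply fold_Rmax_ge_In.
  apply in_cells_In in H. apply (in_map (fun ij => g (fst ij) (snd ij)) _ _ H).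
Qed.

Lemma minij_le m n g i j : in_cells m n i j -> minij m n g <= g i j.
Proof.
  intros H. apply fold_Rmin_le_In.
  apply in_cells_In in H. apply (in_map (fun ij => g (fst ij) (snd ij)) _ _ H).
Qed.

Definition nbhd_cells m n r i j : list (nat * nat) := filter (in_nbhd r i j) (cells m n).

Definition lsum (l : list (nat * nat)) (g : nat -> nat -> R) : R :=
  fold_right Rplus 0 (map (fun hl => g (fst hl) (snd hl)) l).

Lemma nbsum_lsum m n r i j g : nbsum m n r i j g = lsum (nbhd_cells m n r i j) g.
Proof. reflexivity. Qed.

Lemma nbhd_cells_in_cells m n r i j hl : In hl (nbhd_cells m n r i j) -> in_cells m n (fst hl) (snd hl).
Proof. intros H. apply filter_In in H. destruct H. destruct hl. apply in_cells_In. auto. Qed.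

Lemma lsum_le l g1 g2 : (forall hl, In hl l -> g1 (fst hl) (snd hl) <= g2 (fst hl) (snd hl)) ->
  lsum l g1 <= lsum l g2.
Proof.
  unfold lsum. induction l; intros H; simpl; [lra |].
  apply Rplus_le_compat; [apply H; left; auto | apply IHl; intros; apply H; right; auto].
Qed.

Lemma lsum_scal l c g : lsum l (fun h k => c * g h k) = c * lsum l g.
Proof. unfold lsum. induction l; simpl; [ring | rewrite IHl; ring]. Qed.

Lemma lsum_minus l g1 g2 : lsum l (fun h k => g1 h k - g2 h k) = lsum l g1 - lsum l g2.
Proof. unfold lsum. induction l; simpl; [ring | rewrite IHl; ring]. Qed.

Lemma lsum_abs l g : Rabs (lsum l g) <= lsum l (fun h k => Rabs (g h k)).
Proof.
  unfold lsum. induction l; simpl; [rewrite Rabs_R0; lra |].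
  eapply Rle_trans; [apply Rabs_triang | lra].
Qed.

Lemma lsum_ext l g1 g2 : (forall h k, g1 h k = g2 h k) -> lsum l g1 = lsum l g2.
Proof. intros H. unfold lsum. f_equal. apply map_ext. intros. apply H. Qed.

Lemma lsum_zero l : lsum l (fun _ _ => 0) = 0.
Proof. unfold lsum. induction l; simpl; [| rewrite IHl]; ring. Qed.

Lemma lsum_continuity_pt l (G : R -> nat -> nat -> R) t0 :
  (forall hl, In hl l -> continuity_pt (fun t => G t (fst hl) (snd hl)) t0) ->
  continuity_pt (fun t => lsum l (G t)) t0.
Proof.
  unfold lsum. induction l as [|hl l IH]; intros H; simpl.
  - apply continuity_pt_const. intros x y. reflexivity.
  - apply (continuity_pt_plus (fun t => G t (fst hl) (snd hl))); [apply H; left; auto |].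
    apply IH. intros. apply H. right. auto.
Qed.

Lemma nbsum_nonneg m n r i j g : (forall h l, in_cells m n h l -> 0 <= g h l) -> 0 <= nbsum m n r i j g.
Proof.
  intros H. rewrite nbsum_lsum, <- (lsum_zero (nbhd_cells m n r i j)).
  apply lsum_le. intros hl Hhl. apply H. apply (nbhd_cells_in_cells m n r i j). auto.
Qed.

Section Nonlinearity.
Variables (m n r : nat) (C : nat -> nat -> nat -> nat -> R) (f : R -> R) (Mf Lf : R).
Hypothesis HC : forall i j h l, in_cells m n i j -> in_cells m n h l -> 0 <= C i j h l.
Hypothesis HMf : forall x, Rabs (f x) <= Mf.
Hypothesis HLf : forall x1 x2, Rabs (f x1 - f x2) <= Lf * Rabs (x1 - x2).
Hypothesis HLf0 : 0 <= Lf.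

Lemma nbsum_weighted_le i j (w : nat -> nat -> R) M : in_cells m n i j ->
  (forall h l, in_cells m n h l -> Rabs (w h l) <= M) ->
  Rabs (nbsum m n r i j (fun h l => C i j h l * w h l)) <= nbsum m n r i j (C i j) * M.
Proof.
  intros Hij Hw. rewrite !nbsum_lsum.
  eapply Rle_trans; [apply lsum_abs |]. rewrite Rmult_comm, <- lsum_scal.
  apply lsum_le. intros hl Hhl. simpl.
  pose proof (nbhd_cells_in_cells _ _ _ _ _ _ Hhl) as Hc.
  pose proof (HC i j (fst hl) (snd hl) Hij Hc).
  rewrite Rabs_mult, Rabs_right, Rmult_comm by lra. apply Rmult_le_compat_r; auto.
Qed.

Lemma Nl_bound i j (y : Vec) H : in_cells m n i j -> Rabs (y i j) <= H ->
  Rabs (Nl m n r C f y i j) <= nbsum m n r i j (C i j) * Mf * H.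
Proof.
  intros Hij Hy. unfold Nl. rewrite Rabs_mult.
  apply Rmult_le_compat; auto using Rabs_pos. apply nbsum_weighted_le; auto.
Qed.

Lemma Nl_lipschitz i j (y y' : Vec) H D : in_cells m n i j ->
  Rabs (y i j) <= H -> (forall h l, in_cells m n h l -> Rabs (y h l - y' h l) <= D) ->
  Rabs (Nl m n r C f y i j - Nl m n r C f y' i j) <= nbsum m n r i j (C i j) * (Mf + H * Lf) * D.
Proof.
  intros Hij Hy HD. unfold Nl.
  set (S1 := nbsum m n r i j (fun h l => C i j h l * f (y h l))).
  set (S2 := nbsum m n r i j (fun h l => C i j h l * f (y' h l))).
  assert (HS : Rabs (S1 - S2) <= nbsum m n r i j (C i j) * (Lf * D)).
  { replace (S1 - S2) with (nbsum m n r i j (fun h l => C i j h l * (f (y h l) - f (y' h l)))).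
    2:{ unfold S1, S2. rewrite !nbsum_lsum, <- lsum_minus. apply lsum_ext. intros. ring. }
    apply nbsum_weighted_le; auto. intros h l Hhl.
    eapply Rle_trans; [apply HLf | apply Rmult_le_compat_l; auto]. }
  assert (HS2 : Rabs S2 <= nbsum m n r i j (C i j) * Mf) by (apply nbsum_weighted_le; auto).
  pose proof (HD i j Hij) as HDij.
  assert (HD0 : 0 <= D) by (eapply Rle_trans; [apply Rabs_pos | apply HDij]).
  assert (HH : 0 <= H) by (eapply Rle_trans; [apply Rabs_pos | apply Hy]).
  assert (HN : 0 <= nbsum m n r i j (C i j)) by (apply nbsum_nonneg; intros; apply HC; auto).
  replace (S1 * y i j - S2 * y' i j) with ((S1 - S2) * y i j + S2 * (y i j - y' i j)) by ring.
  eapply Rle_trans; [apply Rabs_triang |]. rewrite !Rabs_mult.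
  assert (Rabs (S1 - S2) * Rabs (y i j) <= nbsum m n r i j (C i j) * (Lf * D) * H)
    by (apply Rmult_le_compat; auto using Rabs_pos).
  assert (Rabs S2 * Rabs (y i j - y' i j) <= nbsum m n r i j (C i j) * Mf * D)
    by (apply Rmult_le_compat; auto using Rabs_pos).
  nra.
Qed.

Lemma Nl_continuity_pt i j (Y : R -> Vec) t0 : continuity f ->
  (forall h l, in_cells m n h l -> continuity_pt (fun t => Y t h l) t0) -> in_cells m n i j ->
  continuity_pt (fun t => Nl m n r C f (Y t) i j) t0.
Proof.
  intros Hf HY Hij. unfold Nl.
  apply (continuity_pt_mult (fun t => nbsum m n r i j (fun h l => C i j h l * f (Y t h l)))); [| auto].
  apply (lsum_continuity_pt _ (fun t h l => C i j h l * f (Y t h l))). intros hl Hhl.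
  apply continuity_pt_mult; [apply continuity_pt_const; intros ? ?; reflexivity |].
  apply (continuity_pt_comp (fun t => Y t (fst hl) (snd hl)) f); [| apply Hf].
  apply HY. apply (nbhd_cells_in_cells _ _ _ _ _ _ Hhl).
Qed.

End Nonlinearity.

(** * Picard iteration *)

Lemma geometric_tail_small q c eps : 0 <= q < 1 -> 0 <= c -> 0 < eps ->
  exists N, c * q ^ N / (1 - q) < eps.
Proof.
  intros Hq Hc Heps.
  destruct (pow_lt_1_zero q ltac:(rewrite Rabs_right; lra) (eps * (1 - q) / (c + 1))) as [N HN].
  { apply Rdiv_lt_0_compat; [apply Rmult_lt_0_compat |]; lra. }
  exists N. specialize (HN N (le_n N)). rewrite Rabs_right in HN by (apply Rle_ge, pow_le; lra).
  assert (0 <= q ^ N) by (apply pow_le; lra).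
  apply Rmult_lt_compat_l with (r := c + 1) in HN; [| lra].
  replace ((c + 1) * (eps * (1 - q) / (c + 1))) with (eps * (1 - q)) in HN by (field; lra).
  apply Rmult_lt_reg_r with (r := 1 - q); [lra |].
  replace (c * q ^ N / (1 - q) * (1 - q)) with (c * q ^ N) by (field; lra). nra.
Qed.

Lemma continuity_pt_geometric_limit (F : R -> R) (Fn : nat -> R -> R) q c t :
  0 <= q < 1 -> 0 <= c -> (forall N, continuity_pt (Fn N) t) ->
  (forall N x, Rabs (F x - Fn N x) <= c * q ^ N / (1 - q)) -> continuity_pt F t.
Proof.
  intros Hq Hc HFn Happ. apply continuity_pt_eps. intros eps Heps.
  destruct (geometric_tail_small q c (eps / 3) Hq Hc ltac:(lra)) as [N HN].
  destruct (proj1 (continuity_pt_eps _ _) (HFn N) (eps / 3) ltac:(lra)) as [d [Hd Hcont]].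
  exists d. split; auto. intros y Hy.
  replace (F y - F t) with ((F y - Fn N y) + (Fn N y - Fn N t) - (F t - Fn N t)) by ring.
  pose proof (Happ N y). pose proof (Happ N t). specialize (Hcont y Hy).
  eapply Rle_lt_trans; [apply Rabs_triang |]. rewrite Rabs_Ropp.
  eapply Rle_lt_trans; [apply Rplus_le_compat_r; apply Rabs_triang |]. lra.
Qed.

Section Picard.
Variables (m n : nat) (Adm : (Z -> R -> Vec) -> Prop) (T : (Z -> R -> Vec) -> Z -> R -> Vec) (q B : R).
Hypothesis Hq : 0 <= q < 1.
Hypothesis HB : 0 <= B.
Hypothesis Adm_bound : forall Y, Adm Y -> forall k t i j, in_cells m n i j -> Rabs (Y k t i j) <= B.
Hypothesis Adm_zero : Adm (fun _ _ _ _ => 0).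
Hypothesis T_adm : forall Y, Adm Y -> Adm (T Y).
Hypothesis T_contraction : forall Y Y' D, Adm Y -> Adm Y' -> 0 <= D ->
  (forall k t i j, in_cells m n i j -> Rabs (Y k t i j - Y' k t i j) <= D) ->
  forall k t i j, in_cells m n i j -> Rabs (T Y k t i j - T Y' k t i j) <= q * D.
Hypothesis Adm_closed : forall (Yn : nat -> Z -> R -> Vec) Y,
  (forall N, Adm (Yn N)) ->
  (forall N k t i j, in_cells m n i j -> Rabs (Y k t i j - Yn N k t i j) <= B * q ^ N / (1 - q)) ->
  Adm Y.

Fixpoint picard_iter (N : nat) : Z -> R -> Vec :=
  match N with O => fun _ _ _ _ => 0 | S N' => T (picard_iter N') end.

Definition picard_limit : Z -> R -> Vec :=
  fun k t i j => real (Lim_seq (fun N => picard_iter N k t i j)).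

Lemma picard_iter_adm N : Adm (picard_iter N).
Proof. induction N; simpl; auto. Qed.

Lemma picard_iter_step N k t i j : in_cells m n i j ->
  Rabs (picard_iter (S N) k t i j - picard_iter N k t i j) <= q ^ N * B.
Proof.
  revert k t i j. induction N; intros k t i j Hij.
  - simpl picard_iter at 2. rewrite Rminus_0_r, pow_O, Rmult_1_l. apply (Adm_bound _ (picard_iter_adm 1)). auto.
  - replace (q ^ S N * B) with (q * (q ^ N * B)) by (simpl; ring).
    apply T_contraction; auto using picard_iter_adm.
    apply Rmult_le_pos; [apply pow_le |]; lra.
Qed.

Lemma picard_iter_cauchy N M k t i j : in_cells m n i j ->
  Rabs (picard_iter (N + M) k t i j - picard_iter N k t i j) <= B * q ^ N / (1 - q).
Proof.
  intros Hij. assert (HqN : 0 <= q ^ N) by (apply pow_le; lra).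
  assert (HM : Rabs (picard_iter (N + M) k t i j - picard_iter N k t i j) <= B * q ^ N * (1 - q ^ M) / (1 - q)).
  { induction M as [|M IH].
    - rewrite Nat.add_0_r, Rminus_diag, Rabs_R0, pow_O, Rminus_diag. unfold Rdiv. lra.
    - rewrite Nat.add_succ_r.
      replace (picard_iter (S (N + M)) k t i j - picard_iter N k t i j) with
        ((picard_iter (S (N + M)) k t i j - picard_iter (N + M) k t i j) +
         (picard_iter (N + M) k t i j - picard_iter N k t i j)) by ring.
      eapply Rle_trans; [apply Rabs_triang |].
      pose proof (picard_iter_step (N + M) k t i j Hij) as HD. rewrite pow_add in HD.
      replace (B * q ^ N * (1 - q ^ S M) / (1 - q)) with
        (q ^ N * q ^ M * B + B * q ^ N * (1 - q ^ M) / (1 - q)) by (simpl; field; lra).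
      lra. }
  eapply Rle_trans; [apply HM |].
  unfold Rdiv. apply Rmult_le_compat_r; [left; apply Rinv_0_lt_compat; lra |].
  assert (0 <= B * q ^ N * q ^ M) by (repeat apply Rmult_le_pos; auto; apply pow_le; lra). lra.
Qed.

Lemma picard_limit_spec k t i j : in_cells m n i j ->
  is_lim_seq (fun N => picard_iter N k t i j) (picard_limit k t i j).
Proof.
  intros Hij. apply Lim_seq_correct'. apply ex_lim_seq_cauchy_corr. intros eps.
  destruct (geometric_tail_small q B (eps / 2) Hq HB ltac:(pose proof (cond_pos eps); lra)) as [N HN].
  exists N. intros u v Hu Hv.
  replace u with (N + (u - N))%nat by lia. replace v with (N + (v - N))%nat by lia.
  pose proof (picard_iter_cauchy N (u - N) k t i j Hij).
  pose proof (picard_iter_cauchy N (v - N) k t i j Hij).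
  pose proof (Rabs_triang (picard_iter (N + (u - N)) k t i j - picard_iter N k t i j)
                          (- (picard_iter (N + (v - N)) k t i j - picard_iter N k t i j))) as Htri.
  rewrite Rabs_Ropp in Htri.
  replace (picard_iter (N + (u - N)) k t i j - picard_iter N k t i j
           + - (picard_iter (N + (v - N)) k t i j - picard_iter N k t i j))
    with (picard_iter (N + (u - N)) k t i j - picard_iter (N + (v - N)) k t i j) in Htri by ring.
  lra.
Qed.

Lemma picard_limit_near N k t i j : in_cells m n i j ->
  Rabs (picard_limit k t i j - picard_iter N k t i j) <= B * q ^ N / (1 - q).
Proof.
  intros Hij. pose proof (picard_limit_spec k t i j Hij) as Hl.
  apply (is_lim_seq_incr_n _ N) in Hl.
  rewrite <- (Rmult_1_l (picard_limit k t i j)).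
  apply (is_lim_seq_abs_affine_le _ _ 1 (- picard_iter N k t i j) _ Hl). intros M.
  rewrite Rmult_1_l, Nat.add_comm. apply picard_iter_cauchy. auto.
Qed.

Lemma picard_limit_adm : Adm picard_limit.
Proof. apply (Adm_closed picard_iter); auto using picard_iter_adm, picard_limit_near. Qed.

Lemma picard_limit_fixed k t i j : in_cells m n i j -> T picard_limit k t i j = picard_limit k t i j.
Proof.
  intros Hij.
  assert (Hnear : forall N, 0 <= B * q ^ N / (1 - q))
    by (intros; apply Rmult_le_pos; [apply Rmult_le_pos; auto; apply pow_le; lra | left; apply Rinv_0_lt_compat; lra]).
  assert (T picard_limit k t i j - picard_limit k t i j = 0); [| lra].
  apply (eq_0_of_geometric_bound _ (2 * B / (1 - q)) q Hq). intros N.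
  replace (T picard_limit k t i j - picard_limit k t i j) with
    ((T picard_limit k t i j - T (picard_iter N) k t i j) - (picard_limit k t i j - picard_iter (S N) k t i j))
    by (simpl; ring).
  eapply Rle_trans; [apply Rabs_triang |]. rewrite Rabs_Ropp.
  pose proof (T_contraction picard_limit (picard_iter N) _ picard_limit_adm (picard_iter_adm N) (Hnear N)
                (fun k t i j => picard_limit_near N k t i j) k t i j Hij).
  pose proof (picard_limit_near (S N) k t i j Hij).
  replace (B * q ^ S N / (1 - q)) with (q * (B * q ^ N / (1 - q))) in * by (simpl; field; lra).
  replace (2 * B / (1 - q) * q ^ N) with (2 * (B * q ^ N / (1 - q))) by (field; lra).
  pose proof (Hnear N). nra.
Qed.

Lemma picard_fixed_point_unique Y : Adm Y -> (forall k t i j, in_cells m n i j -> T Y k t i j = Y k t i j) ->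
  forall k t i j, in_cells m n i j -> Y k t i j = picard_limit k t i j.
Proof.
  intros HY HT k t i j Hij.
  assert (Y k t i j - picard_limit k t i j = 0); [| lra].
  apply (eq_0_of_geometric_bound _ (2 * B) q Hq). intros N. revert k t i j Hij.
  induction N; intros k t i j Hij.
  - rewrite pow_O, Rmult_1_r. eapply Rle_trans; [apply Rabs_triang |]. rewrite Rabs_Ropp.
    pose proof (Adm_bound Y HY k t i j Hij). pose proof (Adm_bound _ picard_limit_adm k t i j Hij). lra.
  - rewrite <- (HT k t i j Hij), <- (picard_limit_fixed k t i j Hij).
    replace (2 * B * q ^ S N) with (q * (2 * B * q ^ N)) by (simpl; ring).
    apply T_contraction; auto using picard_limit_adm.
    apply Rmult_le_pos; [lra | apply pow_le; lra].
Qed.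

End Picard.

(** * The bounded solution *)

Definition clamp (th : Z -> R) (k : Z) (t : R) : R := Rmax (sk th (k - 1)) (Rmin (sk th k) t).

Lemma clamp_continuous th k t : continuity_pt (clamp th k) t.
Proof.
  apply continuity_pt_eps. intros e He. exists e. split; auto. intros y Hy.
  eapply Rle_lt_trans; [| exact Hy].
  unfold clamp, Rmax, Rmin. repeat destruct Rle_dec; unfold Rabs; repeat destruct Rcase_abs; lra.
Qed.

Lemma clamp_id th k t : sk th (k - 1) <= t <= sk th k -> clamp th k t = t.
Proof. intros. unfold clamp, Rmax, Rmin. repeat destruct Rle_dec; lra. Qed.

Lemma clamp_low th k t : sk th (k - 1) <= sk th k -> t <= sk th (k - 1) -> clamp th k t = sk th (k - 1).
Proof. intros. unfold clamp, Rmax, Rmin. repeat destruct Rle_dec; lra. Qed.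

Lemma clamp_high th k t : sk th (k - 1) <= sk th k -> sk th k <= t -> clamp th k t = sk th k.
Proof. intros. unfold clamp, Rmax, Rmin. repeat destruct Rle_dec; lra. Qed.

Lemma clamp_in th k t : sk th (k - 1) <= sk th k -> sk th (k - 1) <= clamp th k t <= sk th k.
Proof. intros. unfold clamp, Rmax, Rmin. repeat destruct Rle_dec; lra. Qed.

(* A candidate solution is a family [Y k] of functions, [Y k] standing for the solution on
   [[s_{k-1}, s_k]]; composing with [clamp th k] extends it constantly to all of [R], so
   that the solution operator acts on families continuous on [R]. *)
Definition forcing m n r C f (zeta : Z -> Vec) th (Y : Z -> R -> Vec) (i j : nat) (k : Z) (t : R) : R :=
  zeta k i j - Nl m n r C f (Y k (clamp th k t)) i j.

Definition sol_operator m n r A C f zeta th (Y : Z -> R -> Vec) : Z -> R -> Vec :=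
  fun k t i j => lin_sol th (A i j) (forcing m n r C f zeta th Y i j) k (clamp th k t).

Lemma glued_continuity_pt (u : R -> R) a b L : a < b -> right_lim u a L -> left_cont u b ->
  (forall t, a < t < b -> continuity_pt u t) ->
  forall t0, continuity_pt (fun t => if Rle_dec t a then L else if Rle_dec t b then u t else u b) t0.
Proof.
  intros Hab Hr Hl Hc t0. set (U := fun t => if Rle_dec t a then L else if Rle_dec t b then u t else u b).
  assert (Hconst : forall c, continuity_pt (fun _ => c) t0) by (intros; apply continuity_pt_const; intros ? ?; auto).
  destruct (Rlt_le_dec t0 a) as [H1 | H1].
  - apply (continuity_pt_ext_loc _ (fun _ => L) _ (a - t0)); auto; [lra |].
    intros y Hy. apply Rabs_def2 in Hy. unfold U. destruct (Rle_dec y a); [auto | lra].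
  - destruct (Req_dec t0 a) as [-> | E].
    + apply continuity_pt_eps. intros e He. destruct (Hr e He) as [d [Hd H]].
      exists (Rmin d (b - a)). split; [apply Rmin_pos; lra |]. intros y Hy.
      pose proof (Rmin_l d (b - a)). pose proof (Rmin_r d (b - a)). apply Rabs_def2 in Hy.
      unfold U. destruct (Rle_dec a a); [| lra].
      destruct (Rle_dec y a); [rewrite Rminus_diag, Rabs_R0; auto |].
      destruct (Rle_dec y b); [apply H; lra | lra].
    + destruct (Rlt_le_dec t0 b) as [H2 | H2].
      * apply (continuity_pt_ext_loc _ u _ (Rmin (t0 - a) (b - t0))); [apply Rmin_pos; lra | | apply Hc; lra].
        intros y Hy. pose proof (Rmin_l (t0 - a) (b - t0)). pose proof (Rmin_r (t0 - a) (b - t0)).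
        apply Rabs_def2 in Hy. unfold U. destruct (Rle_dec y a); [lra |]. destruct (Rle_dec y b); [auto | lra].
      * destruct (Req_dec t0 b) as [-> | E2].
        -- apply continuity_pt_eps. intros e He. destruct (Hl e He) as [d [Hd H]].
           exists (Rmin d (b - a)). split; [apply Rmin_pos; lra |]. intros y Hy.
           pose proof (Rmin_l d (b - a)). pose proof (Rmin_r d (b - a)). apply Rabs_def2 in Hy.
           unfold U. destruct (Rle_dec b a); [lra |]. destruct (Rle_dec b b); [| lra].
           destruct (Rle_dec y a); [lra |]. destruct (Rle_dec y b); [apply H; lra |].
           rewrite Rminus_diag, Rabs_R0. auto.
        -- apply (continuity_pt_ext_loc _ (fun _ => u b) _ (t0 - b)); auto; [lra |].
           intros y Hy. apply Rabs_def2 in Hy. unfold U.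
           destruct (Rle_dec y a); [lra |]. destruct (Rle_dec y b); [lra | auto].
Qed.

Section BoundedSolutionExists.
Variables (m n r : nat).
Hypothesis Hm : (1 <= m)%nat.
Hypothesis Hn : (1 <= n)%nat.
Variables (A : nat -> nat -> R) (C : nat -> nat -> nat -> nat -> R) (f : R -> R)
  (th : Z -> R) (omega : R) (p : nat) (MF Mf Lf : R) (K : nat -> nat -> R) (zeta : Z -> Vec).
Hypothesis HC : forall i j h l, in_cells m n i j -> in_cells m n h l -> 0 <= C i j h l.
Hypothesis Hf : continuity f.
Hypothesis Hth_inc : forall k, th k < th (k + 1)%Z.
Hypothesis Homega : 0 < omega.
Hypothesis Hper : forall k, th (k + 2 * Z.of_nat p)%Z = th k + omega.
Hypothesis Hzeta : forall k i j, in_cells m n i j -> Rabs (zeta k i j) <= MF.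
Hypothesis Hlam : 0 < lam m n th p A.
Hypothesis HMf : 0 < Mf.
Hypothesis Hf_bound : forall x, Rabs (f x) <= Mf.
Hypothesis HLf : 0 < Lf.
Hypothesis Hf_lip : forall x1 x2, Rabs (f x1 - f x2) <= Lf * Rabs (x1 - x2).
Hypothesis HK : forall i j, in_cells m n i j -> 0 < K i j.
Hypothesis Hu : forall i j, in_cells m n i j -> forall s tau v, tau <= s -> u_val th (A i j) s tau v ->
  Rabs v <= K i j * exp (- lam_ij th p (A i j) * (s - tau)).
Hypothesis Hcbar : Mf * cbar m n r th p A C K < 1.
Hypothesis Hcontr : (Mf + H0 m n r th p A C K MF Mf * Lf) * cbar m n r th p A C K < 1.

Notation s := (sk th).
Notation H0v := (H0 m n r th p A C K MF Mf).
Notation cb := (cbar m n r th p A C K).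
Notation qq := ((Mf + H0 m n r th p A C K MF Mf * Lf) * cbar m n r th p A C K).
Notation gain i j := (coefK th p (A i j) (K i j)).
Notation mc := (maxij m n (fun i j => coefK th p (A i j) (K i j))).
Notation nbC i j := (nbsum m n r i j (C i j)).
Notation forcingF := (forcing m n r C f zeta th).
Notation T := (sol_operator m n r A C f zeta th).

Lemma cell_1_1 : in_cells m n 1 1.
Proof. unfold in_cells. lia. Qed.

Lemma lam_ij_pos i j : in_cells m n i j -> 0 < lam_ij th p (A i j).
Proof. intros. eapply Rlt_le_trans; [apply Hlam | apply (minij_le m n (fun i j => lam_ij th p (A i j))); auto]. Qed.

Lemma gain_nonneg i j : in_cells m n i j -> 0 <= gain i j.
Proof.
  intros Hij. unfold coefK.
  pose proof (lam_ij_pos i j Hij). pose proof (HK i j Hij).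
  pose proof (psiw_pos th omega p Hth_inc Homega Hper).
  pose proof (deltamax_pos th omega p Hth_inc Homega Hper).
  assert (exp (- lam_ij th p (A i j) * psiw th p) < 1) by (rewrite <- exp_0; apply exp_increasing; nra).
  pose proof (pos_INR p).
  assert (0 <= K i j / lam_ij th p (A i j)) by (apply Rmult_le_pos; [lra | left; apply Rinv_0_lt_compat; auto]).
  assert (0 <= INR p * deltamax th p * K i j / (1 - exp (- lam_ij th p (A i j) * psiw th p))).
  { apply Rmult_le_pos; [| left; apply Rinv_0_lt_compat; lra]. repeat apply Rmult_le_pos; lra. }
  lra.
Qed.

Lemma nbC_nonneg i j : in_cells m n i j -> 0 <= nbC i j.
Proof. intros. apply nbsum_nonneg. intros. apply HC; auto. Qed.

Lemma cbar_ge i j : in_cells m n i j -> gain i j * nbC i j <= cb.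
Proof. intros. apply (maxij_ge m n (fun i j => gain i j * nbsum m n r i j (fun h l => C i j h l))). auto. Qed.

Lemma cbar_nonneg : 0 <= cb.
Proof.
  eapply Rle_trans; [| apply (cbar_ge 1 1 cell_1_1)].
  apply Rmult_le_pos; [apply gain_nonneg | apply nbC_nonneg]; apply cell_1_1.
Qed.

Lemma gain_le_max i j : in_cells m n i j -> gain i j <= mc.
Proof. intros. apply (maxij_ge m n (fun i j => gain i j)). auto. Qed.

Lemma MF_nonneg : 0 <= MF.
Proof. eapply Rle_trans; [apply Rabs_pos | apply (Hzeta 0 1 1 cell_1_1)]. Qed.

Lemma H0_fixed : H0v = MF * mc + Mf * cb * H0v.
Proof. unfold H0. field. lra. Qed.

Lemma H0_nonneg : 0 <= H0v.
Proof.
  unfold H0. pose proof MF_nonneg. pose proof (gain_le_max 1 1 cell_1_1). pose proof (gain_nonneg 1 1 cell_1_1).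
  apply Rmult_le_pos; [| lra]. apply Rmult_le_pos; auto. left. apply Rinv_0_lt_compat. lra.
Qed.

Lemma contraction_ratio_bounds : 0 <= qq < 1.
Proof.
  split; [| apply Hcontr]. apply Rmult_le_pos; [| apply cbar_nonneg].
  pose proof H0_nonneg. nra.
Qed.

Definition admissible (Y : Z -> R -> Vec) : Prop :=
  (forall k i j t, in_cells m n i j -> continuity_pt (fun t => Y k t i j) t) /\
  (forall k t i j, in_cells m n i j -> Rabs (Y k t i j) <= H0v).

Lemma forcing_continuous Y i j k t : admissible Y -> in_cells m n i j -> continuity_pt (forcingF Y i j k) t.
Proof.
  intros [HYc _] Hij. unfold forcing.
  apply continuity_pt_minus; [apply continuity_pt_const; intros ? ?; auto |].
  apply (Nl_continuity_pt m n r C f i j (fun t => Y k (clamp th k t))); auto.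
  intros h l Hhl. apply (continuity_pt_comp (clamp th k) (fun t => Y k t h l)); [apply clamp_continuous | auto].
Qed.

Lemma forcing_bound Y i j k t : admissible Y -> in_cells m n i j ->
  Rabs (forcingF Y i j k t) <= MF + nbC i j * Mf * H0v.
Proof.
  intros [_ HYb] Hij. unfold forcing.
  eapply Rle_trans; [apply Rabs_triang |]. rewrite Rabs_Ropp.
  apply Rplus_le_compat; [apply Hzeta; auto |]. apply Nl_bound; auto.
Qed.

Lemma lin_sol_cell_bound i j g G k t : in_cells m n i j ->
  (forall k t, continuity_pt (g k) t) -> (forall k t, Rabs (g k t) <= G) ->
  s (k - 1) <= t <= s k -> Rabs (lin_sol th (A i j) g k t) <= gain i j * G.
Proof.
  intros Hij Hg HG.
  exact (lin_sol_bound_closed th omega p Hth_inc Homega Hper (A i j) (K i j) (lam_ij th p (A i j))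
           (HK i j Hij) (lam_ij_pos i j Hij) (Hu i j Hij) g Hg G HG k t).
Qed.

Lemma ex_series_forcing Y i j k : admissible Y -> in_cells m n i j ->
  ex_series (init_term th (A i j) (forcingF Y i j) k).
Proof.
  intros HY Hij.
  exact (ex_series_init_term th omega p Hth_inc Homega Hper (A i j) (K i j) (lam_ij th p (A i j))
           (HK i j Hij) (lam_ij_pos i j Hij) (Hu i j Hij) _ (fun k t => forcing_continuous Y i j k t HY Hij)
           _ (fun k t => forcing_bound Y i j k t HY Hij) k).
Qed.

(* The self-map property is where [H0] is used: [gain (MF + nbC Mf H0) <= MF mc + Mf cbar H0 = H0]. *)
Lemma sol_operator_admissible Y : admissible Y -> admissible (T Y).
Proof.
  intros HY. split.
  - intros k i j t Hij. unfold sol_operator.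
    apply (continuity_pt_comp (clamp th k)); [apply clamp_continuous |].
    apply lin_sol_continuous. intros. apply forcing_continuous; auto.
  - intros k t i j Hij. unfold sol_operator.
    eapply Rle_trans.
    + apply lin_sol_cell_bound; auto.
      * intros. apply forcing_continuous; auto.
      * intros. apply forcing_bound; auto.
      * apply clamp_in, sk_le; auto; lia.
    + pose proof (gain_nonneg i j Hij). pose proof (gain_le_max i j Hij). pose proof (cbar_ge i j Hij).
      pose proof MF_nonneg. pose proof H0_nonneg. pose proof (nbC_nonneg i j Hij).
      rewrite H0_fixed at 2.
      assert (gain i j * MF <= MF * mc) by nra.
      assert (gain i j * (nbC i j * Mf * H0v) <= Mf * cb * H0v).
      { replace (gain i j * (nbC i j * Mf * H0v)) with ((gain i j * nbC i j) * (Mf * H0v)) by ring.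
        replace (Mf * cb * H0v) with (cb * (Mf * H0v)) by ring.
        apply Rmult_le_compat_r; nra. }
      nra.
Qed.

Lemma sol_operator_contraction Y Y' D : admissible Y -> admissible Y' -> 0 <= D ->
  (forall k t i j, in_cells m n i j -> Rabs (Y k t i j - Y' k t i j) <= D) ->
  forall k t i j, in_cells m n i j -> Rabs (T Y k t i j - T Y' k t i j) <= qq * D.
Proof.
  intros HY HY' HD0 HD k t i j Hij. unfold sol_operator.
  rewrite <- lin_sol_minus; auto using ex_series_forcing; try (intros; apply forcing_continuous; auto).
  eapply Rle_trans.
  - apply (lin_sol_cell_bound i j _ (nbC i j * (Mf + H0v * Lf) * D)); auto.
    + intros. apply continuity_pt_minus; apply forcing_continuous; auto.
    + intros k0 t0. unfold forcing.
      replace (zeta k0 i j - Nl m n r C f (Y k0 (clamp th k0 t0)) i j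
               - (zeta k0 i j - Nl m n r C f (Y' k0 (clamp th k0 t0)) i j))
        with (- (Nl m n r C f (Y k0 (clamp th k0 t0)) i j - Nl m n r C f (Y' k0 (clamp th k0 t0)) i j)) by ring.
      rewrite Rabs_Ropp. apply (Nl_lipschitz m n r C f Mf Lf); auto; try lra. apply HY. auto.
    + apply clamp_in, sk_le; auto; lia.
  - pose proof (cbar_ge i j Hij). pose proof (gain_nonneg i j Hij). pose proof (nbC_nonneg i j Hij).
    pose proof H0_nonneg.
    assert (0 <= (Mf + H0v * Lf) * D) by (apply Rmult_le_pos; nra).
    replace (gain i j * (nbC i j * (Mf + H0v * Lf) * D)) with ((gain i j * nbC i j) * ((Mf + H0v * Lf) * D)) by ring.
    replace ((Mf + H0v * Lf) * cb * D) with (cb * ((Mf + H0v * Lf) * D)) by ring.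
    apply Rmult_le_compat_r; auto.
Qed.

Lemma admissible_zero : admissible (fun _ _ _ _ => 0).
Proof.
  split; intros.
  - apply continuity_pt_const. intros ? ?. auto.
  - rewrite Rabs_R0. apply H0_nonneg.
Qed.

Lemma admissible_closed (Yn : nat -> Z -> R -> Vec) Y : (forall N, admissible (Yn N)) ->
  (forall N k t i j, in_cells m n i j -> Rabs (Y k t i j - Yn N k t i j) <= H0v * qq ^ N / (1 - qq)) ->
  admissible Y.
Proof.
  intros HYn Happ. pose proof contraction_ratio_bounds as Hq. pose proof H0_nonneg. split.
  - intros k i j t Hij.
    apply (continuity_pt_geometric_limit _ (fun N t => Yn N k t i j) qq H0v); auto.
    intros N. apply (HYn N). auto.
  - intros k t i j Hij.
    assert (Hx : forall N, Rabs (Y k t i j) - H0v <= H0v * qq ^ N / (1 - qq)).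
    { intros N. pose proof (Happ N k t i j Hij). pose proof (proj2 (HYn N) k t i j Hij).
      pose proof (Rabs_triang_inv (Y k t i j) (Yn N k t i j)). lra. }
    destruct (Rle_dec (Rabs (Y k t i j)) H0v) as [| Hgt]; auto. exfalso.
    destruct (geometric_tail_small qq H0v (Rabs (Y k t i j) - H0v) Hq H0_nonneg ltac:(lra)) as [N HN].
    specialize (Hx N). lra.
Qed.

Definition sol_family : Z -> R -> Vec := picard_limit T.

Lemma sol_family_admissible : admissible sol_family.
Proof.
  exact (picard_limit_adm m n admissible T qq H0v contraction_ratio_bounds H0_nonneg (fun Y HY => proj2 HY) admissible_zero
           sol_operator_admissible sol_operator_contraction admissible_closed).
Qed.

Lemma sol_family_fixed k t i j : in_cells m n i j -> T sol_family k t i j = sol_family k t i j.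
Proof.
  exact (picard_limit_fixed m n admissible T qq H0v contraction_ratio_bounds H0_nonneg (fun Y HY => proj2 HY) admissible_zero
           sol_operator_admissible sol_operator_contraction admissible_closed k t i j).
Qed.

Lemma sol_family_unique Y : admissible Y -> (forall k t i j, in_cells m n i j -> T Y k t i j = Y k t i j) ->
  forall k t i j, in_cells m n i j -> Y k t i j = sol_family k t i j.
Proof.
  exact (picard_fixed_point_unique m n admissible T qq H0v contraction_ratio_bounds H0_nonneg (fun Y HY => proj2 HY) admissible_zero
           sol_operator_admissible sol_operator_contraction admissible_closed Y).
Qed.

Definition sol : R -> Vec := fun t => sol_family (idx th t) t.

Notation sol_piece i j := (lin_sol th (A i j) (forcingF sol_family i j)).

Lemma sol_eq_family k t : s (k - 1) < t <= s k -> sol t = sol_family k t.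
Proof. intros. unfold sol. rewrite (idx_unique th omega p Hth_inc Homega Hper t k); auto. Qed.

Lemma sol_family_piece k t i j : in_cells m n i j -> s (k - 1) <= t <= s k ->
  sol_family k t i j = sol_piece i j k t.
Proof. intros. rewrite <- sol_family_fixed by auto. unfold sol_operator. rewrite clamp_id; auto. Qed.

Lemma sol_eq_piece k t i j : in_cells m n i j -> s (k - 1) < t <= s k -> sol t i j = sol_piece i j k t.
Proof. intros. rewrite (sol_eq_family k t) by auto. apply sol_family_piece; auto; lra. Qed.

Lemma sol_piece_continuous i j k t : in_cells m n i j -> continuity_pt (sol_piece i j k) t.
Proof. intros. apply lin_sol_continuous. intros. apply forcing_continuous; auto. apply sol_family_admissible. Qed.

Lemma forcing_sol i j k t : s (k - 1) < t <= s k -> forcingF sol_family i j k t = zeta k i j - Nl m n r C f (sol t) i j.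
Proof. intros. unfold forcing. rewrite clamp_id, (sol_eq_family k t) by lra. auto. Qed.

Lemma sol_derive i j k t : in_cells m n i j -> s (k - 1) < t < s k ->
  derivable_pt_lim (fun x => sol x i j) t (- A i j * sol t i j - Nl m n r C f (sol t) i j + zeta k i j).
Proof.
  intros Hij Ht.
  apply (derivable_pt_lim_ext_loc _ (sol_piece i j k) _ _ (Rmin (t - s (k - 1)) (s k - t))); [apply Rmin_pos; lra | |].
  - intros y Hy. pose proof (Rmin_l (t - s (k - 1)) (s k - t)). pose proof (Rmin_r (t - s (k - 1)) (s k - t)).
    apply Rabs_def2 in Hy. apply sol_eq_piece; auto; lra.
  - pose proof (lin_sol_derive th (A i j) (forcingF sol_family i j)
                  (fun k t => forcing_continuous sol_family i j k t sol_family_admissible Hij) k t) as H.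
    rewrite forcing_sol, <- (sol_eq_piece k t) in H by (auto; lra).
    replace (- A i j * sol t i j - Nl m n r C f (sol t) i j + zeta k i j) with
      (- A i j * sol t i j + (zeta k i j - Nl m n r C f (sol t) i j)) by ring.
    exact H.
Qed.

Lemma sol_continuous i j t : in_cells m n i j -> (forall k, t <> s k) -> continuity_pt (fun x => sol x i j) t.
Proof.
  intros Hij Ht. set (k := idx th t). pose proof (idx_spec th omega p Hth_inc Homega Hper t) as Hk. fold k in Hk.
  assert (t < s k) by (destruct Hk as [_ [H | H]]; auto; exfalso; apply (Ht k); auto).
  apply (continuity_pt_ext_loc _ (sol_piece i j k) _ (Rmin (t - s (k - 1)) (s k - t)));
    [apply Rmin_pos; lra | | apply sol_piece_continuous; auto].
  intros y Hy. pose proof (Rmin_l (t - s (k - 1)) (s k - t)). pose proof (Rmin_r (t - s (k - 1)) (s k - t)).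
  apply Rabs_def2 in Hy. apply sol_eq_piece; auto; lra.
Qed.

Lemma sol_left_cont i j k : in_cells m n i j -> left_cont (fun x => sol x i j) (s k).
Proof.
  intros Hij e He. pose proof (sk_pred_lt th Hth_inc k).
  destruct (proj1 (continuity_pt_eps _ _) (sol_piece_continuous i j k (s k) Hij) e He) as [d [Hd H1]].
  exists (Rmin d (s k - s (k - 1))). split; [apply Rmin_pos; lra |]. intros x Hx.
  pose proof (Rmin_l d (s k - s (k - 1))). pose proof (Rmin_r d (s k - s (k - 1))).
  rewrite !(sol_eq_piece k) by (auto; lra). apply H1. rewrite Rabs_left1; lra.
Qed.

Lemma sol_right_lim i j k : in_cells m n i j ->
  right_lim (fun x => sol x i j) (s k) (sol_piece i j (k + 1)%Z (s k)).
Proof.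
  intros Hij. pose proof (sk_pred_lt th Hth_inc (k + 1)) as Hk. replace (k + 1 - 1)%Z with k in Hk by lia.
  apply (right_lim_ext_loc _ (sol_piece i j (k + 1)%Z) _ _ (s (k + 1) - s k)); [lra | |].
  - intros y Hy. apply sol_eq_piece; auto. replace (k + 1 - 1)%Z with k by lia. lra.
  - apply continuity_pt_right_lim, sol_piece_continuous; auto.
Qed.

Lemma sol_jump i j k : in_cells m n i j ->
  sol_piece i j (k + 1)%Z (s k) - sol (s k) i j =
  - delta th k * A i j * sol (s k) i j - delta th k * Nl m n r C f (sol (s k)) i j + delta th k * zeta k i j.
Proof.
  intros Hij. pose proof (sk_pred_lt th Hth_inc k).
  pose proof (lin_sol_left th (A i j) (forcingF sol_family i j) (k + 1)) as HL.
  replace (k + 1 - 1)%Z with k in HL by lia. rewrite HL.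
  rewrite (init_val_succ th omega p Hth_inc Homega Hper (A i j) (K i j) (lam_ij th p (A i j))
             (HK i j Hij) (lam_ij_pos i j Hij) (Hu i j Hij)
             _ (fun k t => forcing_continuous sol_family i j k t sol_family_admissible Hij)
             _ (fun k t => forcing_bound sol_family i j k t sol_family_admissible Hij)).
  rewrite forcing_sol, <- (sol_eq_piece k (s k)) by (auto; lra). ring.
Qed.

Lemma sol_is_solution : is_solution m n r A C f th zeta sol.
Proof.
  intros i j Hij. split; [| split; [| split]].
  - intros k t Ht. apply sol_derive; auto.
  - intros t Ht. apply sol_continuous; auto.
  - intros k. apply sol_left_cont; auto.
  - intros k. exists (sol_piece i j (k + 1)%Z (s k)). split; [apply sol_right_lim | apply sol_jump]; auto.
Qed.

Lemma sol_bound t : vnorm m n (sol t) <= H0v.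
Proof. apply vnorm_le; [apply H0_nonneg |]. intros. apply sol_family_admissible. auto. Qed.

Section Uniqueness.
Variable psi : R -> Vec.
Hypothesis Hpsi : is_solution m n r A C f th zeta psi.
Hypothesis Hpsi_bound : forall t, vnorm m n (psi t) <= H0v.

Lemma psi_cell_bound t i j : in_cells m n i j -> Rabs (psi t i j) <= H0v.
Proof. intros. eapply Rle_trans; [apply (vnorm_ge m n); auto | apply Hpsi_bound]. Qed.

Let psi_jump_spec (k : Z) (i j : nat) (L : R) : Prop :=
  right_lim (fun x => psi x i j) (s k) L /\
  L - psi (s k) i j = - delta th k * A i j * psi (s k) i j - delta th k * Nl m n r C f (psi (s k)) i j
                      + delta th k * zeta k i j.

Let psi_rlim (k : Z) : Vec := fun i j => epsilon (inhabits 0) (psi_jump_spec k i j).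

Lemma psi_rlim_spec k i j : in_cells m n i j -> psi_jump_spec k i j (psi_rlim k i j).
Proof. intros Hij. apply epsilon_spec. apply (Hpsi i j Hij). Qed.

(* [psi] cut into pieces as in [sol_operator]; left of [s_{k-1}] the piece takes the right limit. *)
Let psi_family (k : Z) (t : R) : Vec :=
  if Rle_dec t (s (k - 1)) then psi_rlim (k - 1)%Z
  else if Rle_dec t (s k) then psi t else psi (s k).

Lemma psi_family_mid k t : s (k - 1) < t <= s k -> psi_family k t = psi t.
Proof.
  intros Ht. unfold psi_family.
  destruct (Rle_dec t (s (k - 1))); [lra |]. destruct (Rle_dec t (s k)); [auto | lra].
Qed.

Lemma psi_family_admissible : admissible psi_family.
Proof.
  split.
  - intros k i j t Hij.
    apply (continuity_pt_ext_loc _ (fun t => if Rle_dec t (s (k - 1)) then psi_rlim (k - 1)%Z i j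
                                           else if Rle_dec t (s k) then psi t i j else psi (s k) i j) _ 1); [lra | |].
    { intros y _. unfold psi_family. destruct (Rle_dec y (s (k - 1))); [reflexivity |].
      destruct (Rle_dec y (s k)); reflexivity. }
    apply glued_continuity_pt.
    + apply sk_pred_lt; auto.
    + apply psi_rlim_spec; auto.
    + apply (Hpsi i j Hij).
    + intros t0 Ht0. apply (Hpsi i j Hij). apply (sk_neq_open_interval th Hth_inc k); auto.
  - intros k t i j Hij. unfold psi_family.
    destruct (Rle_dec t (s (k - 1))); [| destruct (Rle_dec t (s k)); apply psi_cell_bound; auto].
    apply (right_lim_abs_le (fun x => psi x i j) (s (k - 1)) _ 1); [apply psi_rlim_spec; auto | lra |].
    intros. apply psi_cell_bound; auto.
Qed.

Lemma psi_family_fixed k t i j : in_cells m n i j -> T psi_family k t i j = psi_family k t i j.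
Proof.
  intros Hij.
  assert (Hg : forall k t, s (k - 1) < t <= s k ->
                 forcingF psi_family i j k t = zeta k i j - Nl m n r C f (psi t) i j)
    by (intros; unfold forcing; rewrite clamp_id, psi_family_mid by lra; auto).
  destruct (bounded_solution_eq th omega p Hth_inc Homega Hper (A i j) (K i j) (lam_ij th p (A i j))
              (HK i j Hij) (lam_ij_pos i j Hij) (Hu i j Hij)
              _ (fun k t => forcing_continuous psi_family i j k t psi_family_admissible Hij)
              _ (fun k t => forcing_bound psi_family i j k t psi_family_admissible Hij)
              (fun x => psi x i j) (fun k => psi_rlim k i j) H0v) as [U1 U2].
  - intros k0 t0 Ht0. rewrite Hg by lra.
    replace (- A i j * psi t0 i j + (zeta k0 i j - Nl m n r C f (psi t0) i j)) with
      (- A i j * psi t0 i j - Nl m n r C f (psi t0) i j + zeta k0 i j) by ring.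
    apply (Hpsi i j Hij). auto.
  - apply (Hpsi i j Hij).
  - intros k0. apply psi_rlim_spec; auto.
  - intros k0. pose proof (sk_pred_lt th Hth_inc k0).
    rewrite Hg by lra. destruct (psi_rlim_spec k0 i j Hij) as [_ E]. rewrite E. ring.
  - intros. apply psi_cell_bound; auto.
  - unfold sol_operator. pose proof (sk_pred_lt th Hth_inc k).
    destruct (Rle_dec t (s (k - 1))) as [H1 | H1].
    + rewrite clamp_low, lin_sol_left, <- U1 by lra.
      unfold psi_family. destruct (Rle_dec t (s (k - 1))); [auto | lra].
    + destruct (Rle_dec t (s k)) as [H2 | H2].
      * rewrite clamp_id, psi_family_mid by lra. symmetry. apply U2. lra.
      * rewrite clamp_high by lra. unfold psi_family.
        destruct (Rle_dec t (s (k - 1))); [lra |]. destruct (Rle_dec t (s k)); [lra |].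
        symmetry. apply U2. lra.
Qed.

Lemma sol_unique t i j : in_cells m n i j -> psi t i j = sol t i j.
Proof.
  intros Hij.
  pose proof (sol_family_unique psi_family psi_family_admissible psi_family_fixed (idx th t) t i j Hij) as E.
  rewrite psi_family_mid in E by (apply (idx_spec th omega p); auto). auto.
Qed.

End Uniqueness.

Lemma bounded_solution_exists_unique : exists phi : R -> Vec,
  is_solution m n r A C f th zeta phi /\ (forall t, vnorm m n (phi t) <= H0v) /\
  (forall psi : R -> Vec, is_solution m n r A C f th zeta psi -> (forall t, vnorm m n (psi t) <= H0v) ->
     forall t i j, in_cells m n i j -> psi t i j = phi t i j).
Proof. exists sol. split; [apply sol_is_solution | split; [apply sol_bound | apply sol_unique]]. Qed.

End BoundedSolutionExists.

Theorem lemma1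
  (m n r : nat) (Hm : (1 <= m)%nat) (Hn : (1 <= n)%nat)
  (A : nat -> nat -> R) (C : nat -> nat -> nat -> nat -> R) (f : R -> R)
  (th : Z -> R) (omega : R) (p : nat)
  (Lam : Vec -> Prop) (F : Vec -> Vec) (MF : R)
  (Mf Lf : R) (K : nat -> nat -> R)
  (HA : forall i j, in_cells m n i j -> 0 < A i j)
  (HC : forall i j h l, in_cells m n i j -> in_cells m n h l -> 0 <= C i j h l)
  (Hf : continuity f)
  (Hth_inc : forall k, th k < th (k + 1)%Z)
  (Hth_m1 : th (-1)%Z < 0) (Hth_0 : 0 < th 0%Z)
  (Homega : 0 < omega)
  (Hper : forall k, th (k + 2 * Z.of_nat p)%Z = th k + omega)
  (HLam : compactV m n Lam)
  (HFmap : forall v, Lam v -> Lam (F v))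
  (HFcont : contV_on m n Lam F)
  (HMF : (exists eta0, Lam eta0 /\ vnorm m n (F eta0) = MF) /\
         (forall eta0, Lam eta0 -> vnorm m n (F eta0) <= MF))
  (C1 : forall i j k, in_cells m n i j -> delta th k * A i j <> 1)
  (C2 : 0 < lam m n th p A)
  (C3 : 0 < Mf /\ forall x, Rabs (f x) <= Mf)
  (C4 : 0 < Lf /\ forall x1 x2, Rabs (f x1 - f x2) <= Lf * Rabs (x1 - x2))
  (HK : forall i j, in_cells m n i j -> 0 < K i j /\
          forall s tau v, tau <= s -> u_val th (A i j) s tau v ->
            Rabs v <= K i j * exp (- lam_ij th p (A i j) * (s - tau)))
  (C5 : Mf * cbar m n r th p A C K < 1 /\
        (Mf + H0 m n r th p A C K MF Mf * Lf) * cbar m n r th p A C K < 1) :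
  forall zeta : Z -> Vec, in_Theta m n Lam F zeta ->
    exists phi : R -> Vec,
      is_solution m n r A C f th zeta phi /\
      (forall s, vnorm m n (phi s) <= H0 m n r th p A C K MF Mf) /\
      (forall psi : R -> Vec,
         is_solution m n r A C f th zeta psi ->
         (forall s, vnorm m n (psi s) <= H0 m n r th p A C K MF Mf) ->
         forall s i j, in_cells m n i j -> psi s i j = phi s i j).
Proof.
  intros zeta [Hz_Lam Hz_F].
  destruct C3 as [HMf Hf_bound], C4 as [HLf Hf_lip], C5 as [Hcbar Hcontr].
  assert (Hzeta : forall k i j, in_cells m n i j -> Rabs (zeta k i j) <= MF).
  { intros k i j Hij. rewrite <- (Z.sub_add 1 k), Hz_F by auto.
    eapply Rle_trans; [apply (vnorm_ge m n); auto | apply HMF, Hz_Lam]. }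
  exact (bounded_solution_exists_unique m n r Hm Hn A C f th omega p MF Mf Lf K zeta HC Hf Hth_inc Homega Hper
           Hzeta C2 HMf Hf_bound HLf Hf_lip (fun i j Hij => proj1 (HK i j Hij)) (fun i j Hij => proj2 (HK i j Hij))
           Hcbar Hcontr).
Qed.
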